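(* The function $w:\mathbb{R}\times[0,\bar{y}]\to\mathbb{R}$ defined in the context belongs to $C^{2,1}(\mathbb{R}\times[0,\bar{y}])$, i.e. $w$, $w_x$, $w_{xx}$ and $w_y$ exist and are continuous on $\mathbb{R}\times[0,\bar{y}]$.
   Context: Fix constants $\mu\in\mathbb{R}$, $\kappa>0$, $\sigma>0$, $\rho>0$, $\beta>0$, $c\geq0$, $\bar{y}>0$. Let $D_\alpha(x)=\frac{e^{-x^2/4}}{\Gamma(-\alpha)}\int_0^\infty t^{-\alpha-1}e^{-t^2/2-xt}dt$ ($\alpha<0$) and $\psi(x)=e^{\frac{\kappa(x-\mu)^2}{2\sigma^2}}D_{-\rho/\kappa}\big(-\frac{x-\mu}{\sigma}\sqrt{2\kappa}\big)$, the strictly increasing positive solution of $\frac{\sigma^2}{2}u''+\kappa(\mu-x)u'-\rho u=0$. Let $R(x,y)=\frac{xy}{\rho+\kappa}+\frac{\mu\kappa y}{\rho(\rho+\kappa)}-\frac{\kappa\beta y^2}{\rho(\rho+\kappa)}$, $\tilde{R}(x,y)=\frac{\mu\kappa+\rho x-\beta(\rho+2\kappa)y}{\rho(\rho+\kappa)}$, $Q_k(z)=\psi^{(k)}(z)\psi^{(k+2)}(z)-\psi^{(k+1)}(z)^2$. Let $\tilde{x}$ be the unique real zero of $H(x)=\psi'(x)(c-\tilde{R}(x,\bar{y}))+(\rho+\kappa)^{-1}\psi(x)$. Let $D(y,z)=\psi(z)\big[(\rho+\kappa)(c-\tilde{R}(z,y))Q_1(z)+Q_0'(z)\big]$, $N(y,z)=Q_0(z)\Big(\frac{\rho+2\kappa}{\rho}\psi'(z)+(\rho+\kappa)(c-\tilde{R}(z,y))\psi''(z)+\psi'(z)\Big)$,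 $\mathcal{G}=\beta N/D$. Let $\tilde{F}$ be the unique solution on $[0,\bar{y}]$ of $\tilde{F}'(y)=\mathcal{G}(y,\tilde{F}(y))$, $\tilde{F}(\bar{y})=\tilde{x}$; $F(y)=\tilde{F}(y)-\beta y$ is strictly increasing, with inverse $F^{-1}:[F(0),\bar{x}]\to[0,\bar{y}]$, where $\bar{x}=F(\bar{y})=\tilde{x}-\beta\bar{y}$. Let $A(y)=\dfrac{\psi'(\tilde{F}(y))\big(c-\tilde{R}(\tilde{F}(y),y)\big)+(\rho+\kappa)^{-1}\psi(\tilde{F}(y))}{-\beta\,Q_0(\tilde{F}(y))}$ for $y\in[0,\bar{y}]$. Set $\mathbb{W}=\{(x,y):y\in[0,\bar{y}),x<F(y)\}$, $\mathbb{I}_1=\{(x,y):y\in[0,\bar{y}),F(y)\leq x<\bar{x}\}$, $\mathbb{I}_2=\{(x,y):y\in[0,\bar{y}),x\geq\bar{x}\}$. Define $w(x,y)=A(y)\psi(x+\beta y)+R(x,y)$ if $(x,y)\in\mathbb{W}$ or ($y=\bar{y}$, $x<\bar{x}$); $w(x,y)=A(F^{-1}(x))\psi(x+\beta F^{-1}(x))+R(x,F^{-1}(x))-c(F^{-1}(x)-y)$ if $(x,y)\in\mathbb{I}_1$; $w(x,y)=R(x,\bar{y})-c(\bar{y}-y)$ if $(x,y)\in\mathbb{I}_2$ or ($y=\bar{y}$, $x\geq\bar{x}$). *)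

From Stdlib Require Import Reals ClassicalEpsilon.
From Coquelicot Require Import Coquelicot.
Open Scope R_scope.

Definition Gamma_fn (s : R) : R :=
  RInt_gen (fun t => Rpower t (s - 1) * exp (- t)) (at_right 0) (Rbar_locally p_infty).

(* Parabolic cylinder function D_alpha (alpha < 0), integral representation. *)
Definition Dpc (alpha x : R) : R :=
  exp (- x ^ 2 / 4) / Gamma_fn (- alpha) *
  RInt_gen (fun t => Rpower t (- alpha - 1) * exp (- t ^ 2 / 2 - x * t))
           (at_right 0) (Rbar_locally p_infty).

Record Params := mkParams {
  p_mu : R; p_kappa : R; p_sigma : R; p_rho : R; p_beta : R; p_c : R; p_ybar : R }.

Section Model.
Variable p : Params.
Local Notation mu := (p_mu p). Local Notation kappa := (p_kappa p).
Local Notation sigma := (p_sigma p). Local Notation rho := (p_rho p).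
Local Notation beta := (p_beta p). Local Notation c := (p_c p).
Local Notation ybar := (p_ybar p).

Definition psi (x : R) : R :=
  exp (kappa * (x - mu) ^ 2 / (2 * sigma ^ 2)) *
  Dpc (- rho / kappa) (- (x - mu) / sigma * sqrt (2 * kappa)).

Definition dpsi (k : nat) (x : R) : R := Derive_n psi k x.

Definition Rfun (x y : R) : R :=
  x * y / (rho + kappa) + mu * kappa * y / (rho * (rho + kappa))
  - kappa * beta * y ^ 2 / (rho * (rho + kappa)).

Definition Rtilde (x y : R) : R :=
  (mu * kappa + rho * x - beta * (rho + 2 * kappa) * y) / (rho * (rho + kappa)).

Definition Qk (k : nat) (z : R) : R :=
  dpsi k z * dpsi (k + 2) z - (dpsi (k + 1) z) ^ 2.

Definition Hfun (x : R) : R :=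
  dpsi 1 x * (c - Rtilde x ybar) + / (rho + kappa) * psi x.

Definition Dfun (y z : R) : R :=
  psi z * ((rho + kappa) * (c - Rtilde z y) * Qk 1 z + Derive (Qk 0) z).

Definition Nfun (y z : R) : R :=
  Qk 0 z * ((rho + 2 * kappa) / rho * dpsi 1 z
            + (rho + kappa) * (c - Rtilde z y) * dpsi 2 z + dpsi 1 z).

Definition Gfun (y z : R) : R := beta * Nfun y z / Dfun y z.

Definition Ffun (Ft : R -> R) (y : R) : R := Ft y - beta * y.

Definition xbar (Ft : R -> R) : R := Ffun Ft ybar.

Definition Finv (Ft : R -> R) (x : R) : R :=
  epsilon (inhabits 0) (fun y => 0 <= y <= ybar /\ Ffun Ft y = x).

Definition Afun (Ft : R -> R) (y : R) : R :=
  (dpsi 1 (Ft y) * (c - Rtilde (Ft y) y) + / (rho + kappa) * psi (Ft y))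
  / (- beta * Qk 0 (Ft y)).

(* The value function w on R x [0, ybar] (values for y outside are irrelevant). *)
Definition wfun (Ft : R -> R) (x y : R) : R :=
  if Rlt_dec y ybar then
    (if Rlt_dec x (Ffun Ft y) then
       Afun Ft y * psi (x + beta * y) + Rfun x y
     else if Rlt_dec x (xbar Ft) then
       let z := Finv Ft x in
       Afun Ft z * psi (x + beta * z) + Rfun x z - c * (z - y)
     else Rfun x ybar - c * (ybar - y))
  else
    (if Rlt_dec x (xbar Ft) then Afun Ft y * psi (x + beta * y) + Rfun x y
     else Rfun x ybar - c * (ybar - y)).

End Model.

Definition deriv_within (f : R -> R) (a b y l : R) : Prop :=
  filterlim (fun h => (f (y + h) - f y) / h)
            (within (fun h => h <> 0 /\ a <= y + h <= b) (locally 0)) (locally l).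

Definition cont_strip (f : R -> R -> R) (yb : R) : Prop :=
  forall x y, 0 <= y <= yb -> forall eps, 0 < eps -> exists delta, 0 < delta /\
    forall x' y', 0 <= y' <= yb -> Rabs (x' - x) < delta -> Rabs (y' - y) < delta ->
      Rabs (f x' y' - f x y) < eps.

Definition C21_strip (w : R -> R -> R) (yb : R) : Prop :=
  exists wx wxx wy : R -> R -> R,
    (forall x y, 0 <= y <= yb ->
       is_derive (fun s => w s y) x (wx x y) /\
       is_derive (fun s => wx s y) x (wxx x y) /\
       deriv_within (fun t => w x t) 0 yb y (wy x y)) /\
    cont_strip w yb /\ cont_strip wx yb /\ cont_strip wxx yb /\ cont_strip wy yb.

(* Extend F~ linearly outside [0, ybar], let A be the coefficient A(y) along the extended
   curve and Phi x z = A z psi (x + beta z) + R x z - c z the value of waiting at level z.  With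
   F^{-1} clamped to [0, ybar], w x y = Phi x (max y (F^{-1} x)) + c y on the whole strip; the
   condition H(x~) = 0 says A(ybar) = 0, which glues the region I_2.  Phi is C^1 in z and smooth
   in x, and the ODE for F~ is exactly the smooth-fit condition Phi_z = Phi_xz = 0 on the curve
   x = F z.  So between the two stopping levels of nearby points x, x' the partials Phi_z and
   Phi_xz are O(|x' - x|), the kink of the max is invisible to first order, and w_x, w_xx, w_y are
   Phi_x, Phi_xx, c + Phi_z evaluated at the stopping level (Phi_z being cut off outside the
   waiting region).  Smoothness of psi comes from the moments
   J_k(u) = int_0^oo t^(a+k) e^(-t^2/2 - u t) dt, which satisfy J_k' = - J_(k+1), and Q_0 > 0 is
   the Cauchy-Schwarz inequality J_1^2 < J_0 J_2. *)
From Stdlib Require Import Reals Lra Lia Psatz ClassicalEpsilon.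
From Coquelicot Require Import Coquelicot.
Open Scope R_scope.
Ltac Req := match goal with |- ?a = ?b => change (@eq R a b) end.

Lemma is_derive_Rmult (f g : R -> R) x df dg : is_derive f x df -> is_derive g x dg ->
  is_derive (fun t => f t * g t) x (df * g x + f x * dg).
Proof. intros H1 H2. apply (is_derive_mult f g x df dg H1 H2). intros; apply Rmult_comm. Qed.
Lemma is_derive_Rplus (f g : R -> R) x df dg : is_derive f x df -> is_derive g x dg ->
  is_derive (fun t => f t + g t) x (df + dg).
Proof. intros H1 H2. apply (is_derive_plus f g x df dg H1 H2). Qed.
Lemma is_derive_Rminus (f g : R -> R) x df dg : is_derive f x df -> is_derive g x dg ->
  is_derive (fun t => f t - g t) x (df - dg).
Proof. intros H1 H2. apply (is_derive_minus f g x df dg H1 H2). Qed.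
Lemma is_derive_Rcomp (f g : R -> R) x df dg : is_derive f (g x) df -> is_derive g x dg ->
  is_derive (fun t => f (g t)) x (df * dg).
Proof. intros H1 H2. rewrite Rmult_comm. apply (is_derive_comp f g x df dg H1 H2). Qed.
Lemma is_derive_Rconst (k x : R) : is_derive (fun _ => k) x 0.
Proof. apply (is_derive_const k x). Qed.
Lemma is_derive_Rid (x : R) : is_derive (fun t => t) x 1.
Proof. apply (is_derive_id x). Qed.
Lemma is_derive_Rscal (f : R -> R) x k df : is_derive f x df -> is_derive (fun t => k * f t) x (k * df).
Proof. apply is_derive_scal. Qed.
Lemma is_derive_val (f : R -> R) (x l l' : R) : is_derive f x l -> @eq R l l' -> is_derive f x l'.
Proof. intros H ->. exact H. Qed.
Lemma is_derive_Rext (f g : R -> R) x l : (forall t, f t = g t) -> is_derive f x l -> is_derive g x l.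
Proof. apply is_derive_ext. Qed.
Lemma is_derive_Rcontinuous (f : R -> R) x l : is_derive f x l -> continuous f x.
Proof. intros H. apply (@ex_derive_continuous R_AbsRing R_NormedModule). exists l; exact H. Qed.
Lemma is_derive_affine (a b x : R) : is_derive (fun s => a * s + b) x a.
Proof.
  eapply is_derive_val. apply is_derive_Rplus. apply is_derive_Rscal. apply is_derive_Rid.
  apply is_derive_Rconst. ring.
Qed.

Lemma continuous_Rmult (f g : R -> R) x : continuous f x -> continuous g x ->
  continuous (fun t => f t * g t) x.
Proof. intros H1 H2. apply (@continuous_mult R_UniformSpace R_AbsRing f g x H1 H2). Qed.
Lemma continuous_Rplus (f g : R -> R) x : continuous f x -> continuous g x ->
  continuous (fun t => f t + g t) x.
Proof. intros H1 H2. apply (@continuous_plus R_UniformSpace R_AbsRing R_NormedModule f g x H1 H2).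
Qed.
Lemma continuous_Ropp (f : R -> R) x : continuous f x -> continuous (fun t => - f t) x.
Proof. intros H1. apply (@continuous_opp R_UniformSpace R_AbsRing R_NormedModule f x H1). Qed.
Lemma continuous_Rminus (f g : R -> R) x : continuous f x -> continuous g x ->
  continuous (fun t => f t - g t) x.
Proof. intros H1 H2. apply (continuous_Rplus f (fun t => - g t)); auto. apply continuous_Ropp; auto.
Qed.
Lemma continuous_Rcomp (f g : R -> R) x : continuous g x -> continuous f (g x) ->
  continuous (fun t => f (g t)) x.
Proof.
  intros H1 H2.
  apply (@continuous_comp R_UniformSpace R_UniformSpace R_UniformSpace g f x H1 H2).
Qed.
Lemma continuous_Rconst (k x : R) : continuous (fun _ : R => k) x.
Proof. apply (@continuous_const R_UniformSpace R_UniformSpace k x). Qed.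
Lemma continuous_Rid (x : R) : continuous (fun t : R => t) x.
Proof. apply (@continuous_id R_UniformSpace x). Qed.
Lemma continuous_Rext (f g : R -> R) x : (forall t, f t = g t) -> continuous f x -> continuous g x.
Proof. intros H. apply continuous_ext. auto. Qed.
Lemma continuous_Rpow (f : R -> R) n x : continuous f x -> continuous (fun t => f t ^ n) x.
Proof. intros H. induction n; simpl. apply continuous_Rconst. apply continuous_Rmult; auto. Qed.
Lemma continuous_affine (a b x : R) : continuous (fun s => a * s + b) x.
Proof. eapply is_derive_Rcontinuous. apply is_derive_affine. Qed.

Lemma abs_of_ball_R (x y e : R) : @ball R_UniformSpace x e y -> Rabs (y - x) < e.
Proof. exact (fun h => h). Qed.
Lemma ball_R_of_abs (x y e : R) : Rabs (y - x) < e -> @ball R_UniformSpace x e y.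
Proof. exact (fun h => h). Qed.

Lemma continuous_R_eps (f : R -> R) (x : R) :
  (forall eps, 0 < eps -> exists d, 0 < d /\
     forall x', Rabs (x' - x) < d -> Rabs (f x' - f x) < eps) ->
  continuous f x.
Proof.
  intros H. apply continuity_pt_filterlim. intros eps Heps. destruct (H eps Heps) as [d [Hd Hh]].
  exists d. split; auto. intros x' [_ Hx']. apply Hh. exact Hx'.
Qed.

Lemma is_derive_of_quadratic_remainder (f : R -> R) (u l C : R) : 0 <= C ->
  (forall h, Rabs h <= 1 -> Rabs (f (u + h) - f u - l * h) <= C * h ^ 2) ->
  is_derive f u l.
Proof.
  intros HC Hq. apply is_derive_Reals. intros eps Heps.
  assert (Hd : 0 < Rmin 1 (eps / (C + 1))) by (apply Rmin_pos; [lra| apply Rdiv_lt_0_compat; lra]).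
  exists (mkposreal _ Hd). intros h Hh0 Hh. simpl in Hh.
  assert (Hh1 := Rmin_l 1 (eps / (C + 1))). assert (Hh2 := Rmin_r 1 (eps / (C + 1))).
  assert (Hah : 0 < Rabs h) by (apply Rabs_pos_lt; auto).
  specialize (Hq h ltac:(lra)).
  replace ((f (u + h) - f u) / h - l) with ((f (u + h) - f u - l * h) / h) by (field; auto).
  unfold Rdiv. rewrite Rabs_mult, Rabs_inv.
  apply Rle_lt_trans with (C * Rabs h).
  { apply Rmult_le_reg_r with (Rabs h); auto. rewrite Rmult_assoc, Rinv_l by lra.
    rewrite <- (pow2_abs h) in Hq. nra. }
  apply Rle_lt_trans with ((C + 1) * Rabs h). nra.
  apply Rlt_le_trans with ((C + 1) * (eps / (C + 1))). apply Rmult_lt_compat_l; lra.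
  right. field. lra.
Qed.

Lemma MVT_abs_le (f f' : R -> R) (a b K : R) :
  (forall c, Rmin a b <= c <= Rmax a b -> is_derive f c (f' c)) ->
  (forall c, Rmin a b <= c <= Rmax a b -> Rabs (f' c) <= K) ->
  Rabs (f b - f a) <= K * Rabs (b - a).
Proof.
  intros Hd HK. destruct (MVT_abs f f' a b) as [c [Hc Hcr]].
  { intros c Hc. apply is_derive_Reals. auto. }
  rewrite Hc. apply Rmult_le_compat_r. apply Rabs_pos. auto.
Qed.

Lemma lub_approx (E : R -> Prop) (l eps : R) : is_lub E l -> 0 < eps ->
  exists v, E v /\ l - eps < v.
Proof.
  intros [Hub Hlub] Heps. apply NNPP. intros Hn.
  assert (l <= l - eps); [| lra].
  apply Hlub. intros v Hv. apply Rnot_lt_le. intros Hc. apply Hn. exists v. auto.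
Qed.

Lemma ex_lim_pinfty_monotone (phi : R -> R) (B : R) :
  (forall x y, 1 <= x <= y -> phi x <= phi y) ->
  (forall x, 1 <= x -> phi x <= B) ->
  exists l, filterlim phi (Rbar_locally p_infty) (locally l).
Proof.
  intros Hm HB.
  set (E := fun v => exists x, 1 <= x /\ v = phi x).
  assert (Hb : bound E) by (exists B; intros v [x [Hx ->]]; auto).
  assert (He : exists v, E v) by (exists (phi 1), 1; split; [lra | auto]).
  destruct (completeness E Hb He) as [l Hl].
  exists l. apply filterlim_locally. intros [eps Heps].
  destruct (lub_approx E l eps Hl Heps) as [v [[x0 [Hx0 ->]] Hv]].
  exists x0. intros x Hx. apply ball_R_of_abs, Rabs_lt_between'. simpl.
  assert (phi x0 <= phi x) by (apply Hm; lra).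
  assert (phi x <= l) by (apply Hl; exists x; split; [lra | auto]).
  lra.
Qed.

Lemma ex_lim_right0_antitone (phi : R -> R) (B : R) :
  (forall x y, 0 < x <= y -> y <= 1 -> phi y <= phi x) ->
  (forall x, 0 < x <= 1 -> phi x <= B) ->
  exists l, filterlim phi (at_right 0) (locally l).
Proof.
  intros Hm HB.
  set (E := fun v => exists x, 0 < x <= 1 /\ v = phi x).
  assert (Hb : bound E) by (exists B; intros v [x [Hx ->]]; auto).
  assert (He : exists v, E v) by (exists (phi 1), 1; split; [lra | auto]).
  destruct (completeness E Hb He) as [l Hl].
  exists l. apply filterlim_locally. intros [eps Heps].
  destruct (lub_approx E l eps Hl Heps) as [v [[x0 [Hx0 ->]] Hv]].
  exists (mkposreal x0 ltac:(lra)). intros x Hx Hxp. apply abs_of_ball_R in Hx. simpl in Hx.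
  rewrite Rminus_0_r, Rabs_pos_eq in Hx by lra.
  apply ball_R_of_abs, Rabs_lt_between'. simpl.
  assert (phi x0 <= phi x) by (apply Hm; lra).
  assert (phi x <= l) by (apply Hl; exists x; split; [lra | auto]).
  lra.
Qed.

Lemma is_RInt_gen_at_point_pinfty (f I : R -> R) (l : R) :
  (forall b, 1 < b -> is_RInt f 1 b (I b)) ->
  filterlim I (Rbar_locally p_infty) (locally l) ->
  is_RInt_gen f (at_point 1) (Rbar_locally p_infty) l.
Proof.
  intros HI Hl P HP. destruct (Hl P HP) as [M HM].
  apply Filter_prod with (Q := fun a => a = 1) (R := fun b => Rmax 1 M < b).
  - reflexivity.
  - exists (Rmax 1 M). auto.
  - intros x y -> Hy. exists (I y). split.
    + apply HI. generalize (Rmax_l 1 M); lra.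
    + apply HM. generalize (Rmax_r 1 M); lra.
Qed.

Lemma is_RInt_gen_right0_at_point (f I : R -> R) (l : R) :
  (forall a, 0 < a < 1 -> is_RInt f a 1 (I a)) ->
  filterlim I (at_right 0) (locally l) ->
  is_RInt_gen f (at_right 0) (at_point 1) l.
Proof.
  intros HI Hl P HP. destruct (Hl P HP) as [d Hd].
  assert (Hp : 0 < Rmin 1 d) by (apply Rmin_pos; [lra | apply cond_pos]).
  assert (Hm1 := Rmin_l 1 d). assert (Hm2 := Rmin_r 1 d).
  apply Filter_prod with (Q := fun a => 0 < a < Rmin 1 d) (R := fun b => b = 1).
  - exists (mkposreal _ Hp). intros y Hy Hy0. apply abs_of_ball_R in Hy. simpl in Hy.
    rewrite Rminus_0_r, Rabs_pos_eq in Hy by lra. lra.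
  - reflexivity.
  - intros x y Hx ->. exists (I x). split.
    + apply HI. lra.
    + apply Hd; [| lra]. apply ball_R_of_abs. rewrite Rminus_0_r, Rabs_pos_eq; lra.
Qed.

Lemma is_derive_Rpower (a t : R) : 0 < t -> is_derive (fun s => Rpower s a) t (a * Rpower t (a - 1)).
Proof. intros Ht. apply is_derive_Reals. apply derivable_pt_lim_power. auto. Qed.

Lemma continuous_Rpower (a t : R) : 0 < t -> continuous (fun s => Rpower s a) t.
Proof. intros Ht. eapply is_derive_Rcontinuous. apply is_derive_Rpower; auto. Qed.

Lemma Rpower_pos (t a : R) : 0 < Rpower t a.
Proof. apply exp_pos. Qed.

Lemma is_RInt_Rpower (a x : R) : -1 < a -> 0 < x -> x <= 1 ->
  is_RInt (fun t => Rpower t a) x 1 ((Rpower 1 (a + 1) - Rpower x (a + 1)) / (a + 1)).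
Proof.
  intros Ha Hx Hx1.
  replace ((Rpower 1 (a + 1) - Rpower x (a + 1)) / (a + 1)) with
    (minus ((fun s => / (a + 1) * Rpower s (a + 1)) 1) ((fun s => / (a + 1) * Rpower s (a + 1)) x))
    by (unfold minus, plus, opp; simpl; field; lra).
  apply (is_RInt_derive (V := R_CompleteNormedModule) (fun s => / (a + 1) * Rpower s (a + 1))).
  - intros t Ht. rewrite Rmin_left, Rmax_right in Ht by lra.
    eapply is_derive_val. apply is_derive_Rscal, is_derive_Rpower. lra.
    replace (a + 1 - 1) with a by ring. Req. field. lra.
  - intros t Ht. rewrite Rmin_left, Rmax_right in Ht by lra. apply continuous_Rpower. lra.
Qed.

Lemma is_RInt_exp_half (M x : R) :
  is_RInt (fun t => M * exp (- t / 2)) 1 x (2 * M * exp (- 1 / 2) - 2 * M * exp (- x / 2)).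
Proof.
  replace (2 * M * exp (- 1 / 2) - 2 * M * exp (- x / 2)) with
    ((-2 * M * exp (- x / 2)) - (-2 * M * exp (- 1 / 2))) by ring.
  change (is_RInt (fun t => M * exp (- t / 2)) 1 x
    (minus ((fun s => -2 * M * exp (- s / 2)) x) ((fun s => -2 * M * exp (- s / 2)) 1))).
  apply (is_RInt_derive (V := R_CompleteNormedModule) (fun s => -2 * M * exp (- s / 2))).
  - intros t _. apply (is_derive_Rext (fun s => -2 * M * exp ((-1/2) * s + 0))).
    { intros; f_equal; f_equal; field. }
    eapply is_derive_val. apply is_derive_Rscal, (is_derive_Rcomp exp (fun s => (-1/2) * s + 0)).
    apply is_derive_exp. apply is_derive_affine.
    replace (- t / 2) with ((-1/2) * t + 0) by field. Req. field.
  - intros t _. apply continuous_Rmult. apply continuous_Rconst.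
    apply (continuous_Rcomp exp (fun t => - t / 2)); [| apply continuous_exp].
    apply (continuous_Rext (fun t => (-1/2) * t + 0)). intros; field. apply continuous_affine.
Qed.

Section ImproperIntegral.
Variable f : R -> R.
Hypothesis f_cont : forall t, 0 < t -> continuous f t.
Hypothesis f_ge0 : forall t, 0 < t -> 0 <= f t.

Lemma ex_RInt_pos_pos (x y : R) : 0 < x -> 0 < y -> ex_RInt f x y.
Proof.
  intros Hx Hy. apply (ex_RInt_continuous (V := R_CompleteNormedModule)). intros z Hz. apply f_cont.
  generalize (Rmin_glb_lt x y 0 Hx Hy). lra.
Qed.

Lemma RInt_Chasles_pos (x y z : R) : 0 < x -> 0 < y -> 0 < z ->
  RInt f x y + RInt f y z = RInt f x z.
Proof. intros. apply (RInt_Chasles (V := R_CompleteNormedModule)); apply ex_RInt_pos_pos; auto. Qed.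

Lemma RInt_pos_ge0 (x y : R) : 0 < x <= y -> 0 <= RInt f x y.
Proof. intros. apply RInt_ge_0. lra. apply ex_RInt_pos_pos; lra. intros; apply f_ge0; lra. Qed.

Lemma ex_RInt_gen_tail (M : R) : 0 <= M -> (forall t, 1 <= t -> f t <= M * exp (- t / 2)) ->
  exists l, is_RInt_gen f (at_point 1) (Rbar_locally p_infty) l.
Proof.
  intros HM Hb.
  destruct (ex_lim_pinfty_monotone (fun b => RInt f 1 b) (2 * M * exp (- 1 / 2))) as [l Hl].
  - intros x y Hxy. rewrite <- (RInt_Chasles_pos 1 x y) by lra.
    generalize (RInt_pos_ge0 x y ltac:(lra)). lra.
  - intros x Hx. apply Rle_trans with (2 * M * exp (- 1 / 2) - 2 * M * exp (- x / 2)).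
    + rewrite <- (is_RInt_unique _ _ _ _ (is_RInt_exp_half M x)).
      apply RInt_le; auto. apply ex_RInt_pos_pos; lra. eexists; apply is_RInt_exp_half.
      intros t Ht. apply Hb; lra.
    + generalize (exp_pos (- x / 2)); nra.
  - exists l. apply (is_RInt_gen_at_point_pinfty f (fun b => RInt f 1 b)); auto.
    intros x Hx. apply (RInt_correct (V := R_CompleteNormedModule)). apply ex_RInt_pos_pos; lra.
Qed.

Lemma ex_RInt_gen_head (a M : R) : -1 < a -> 0 <= M ->
  (forall t, 0 < t <= 1 -> f t <= M * Rpower t a) ->
  exists l, is_RInt_gen f (at_right 0) (at_point 1) l.
Proof.
  intros Ha HM Hb.
  destruct (ex_lim_right0_antitone (fun b => RInt f b 1) (M * (Rpower 1 (a + 1) / (a + 1)))) as [l Hl].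
  - intros x y Hxy Hy. rewrite <- (RInt_Chasles_pos x y 1) by lra.
    generalize (RInt_pos_ge0 x y ltac:(lra)). lra.
  - intros x Hx. destruct (Req_dec x 1) as [->|Hx1].
    { rewrite RInt_point. apply Rmult_le_pos; auto. apply Rlt_le, Rdiv_lt_0_compat. apply exp_pos.
      lra. }
    assert (HI : is_RInt (fun t => M * Rpower t a) x 1
                   (M * ((Rpower 1 (a + 1) - Rpower x (a + 1)) / (a + 1))))
      by exact (is_RInt_scal _ _ _ M _ (is_RInt_Rpower a x Ha ltac:(lra) ltac:(lra))).
    apply Rle_trans with (M * ((Rpower 1 (a + 1) - Rpower x (a + 1)) / (a + 1))).
    + rewrite <- (is_RInt_unique _ _ _ _ HI). apply RInt_le; auto. lra.
      apply ex_RInt_pos_pos; lra. eexists; apply HI. intros t Ht. apply Hb; lra.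
    + apply Rmult_le_compat_l; auto. unfold Rdiv. apply Rmult_le_compat_r.
      apply Rlt_le, Rinv_0_lt_compat; lra.
      generalize (Rpower_pos x (a + 1)). lra.
  - exists l. apply (is_RInt_gen_right0_at_point f (fun b => RInt f b 1)); auto.
    intros x Hx. apply (RInt_correct (V := R_CompleteNormedModule)). apply ex_RInt_pos_pos; lra.
Qed.

Lemma ex_RInt_gen_dominated (a M1 M2 : R) : -1 < a -> 0 <= M1 -> 0 <= M2 ->
  (forall t, 1 <= t -> f t <= M1 * exp (- t / 2)) ->
  (forall t, 0 < t <= 1 -> f t <= M2 * Rpower t a) ->
  exists l, is_RInt_gen f (at_right 0) (Rbar_locally p_infty) l.
Proof.
  intros Ha HM1 HM2 Hb1 Hb2.
  destruct (ex_RInt_gen_head a M2 Ha HM2 Hb2) as [l1 Hl1].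
  destruct (ex_RInt_gen_tail M1 HM1 Hb1) as [l2 Hl2].
  exists (plus l1 l2). exact (is_RInt_gen_Chasles f 1 l1 l2 Hl1 Hl2).
Qed.

Lemma is_RInt_gen_pos (l c d : R) : is_RInt_gen f (at_right 0) (Rbar_locally p_infty) l ->
  0 < c < d -> (forall t, c < t < d -> 0 < f t) -> 0 < l.
Proof.
  intros Hl Hcd Hpos.
  assert (Hm : 0 < RInt f c d) by (apply RInt_gt_0; try lra; auto; intros; apply f_cont; lra).
  set (m := RInt f c d) in *.
  destruct (Hl _ (locally_ball l (mkposreal (m / 2) ltac:(lra)))) as [Q R0 [eps HQ] [M HR] HQR].
  set (a0 := Rmin (eps / 2) (c / 2)). set (b0 := Rmax (M + 1) (d + 1)).
  assert (Ha0 : 0 < a0) by (apply Rmin_pos; generalize (cond_pos eps); lra).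
  assert (Ha0c : a0 < c) by (generalize (Rmin_r (eps / 2) (c / 2)); unfold a0; lra).
  assert (Hb0 : d < b0) by (generalize (Rmax_r (M + 1) (d + 1)); unfold b0; lra).
  destruct (HQR a0 b0) as [y [Hy Hyl]].
  - apply HQ; [| lra]. apply ball_R_of_abs. rewrite Rminus_0_r, Rabs_pos_eq by lra.
    generalize (Rmin_l (eps / 2) (c / 2)) (cond_pos eps). unfold a0. lra.
  - apply HR. generalize (Rmax_l (M + 1) (d + 1)). unfold b0. lra.
  - simpl in Hy. apply (is_RInt_unique (V := R_CompleteNormedModule)) in Hy.
    apply abs_of_ball_R in Hyl. simpl in Hyl.
    assert (m <= y).
    { rewrite <- Hy, <- (RInt_Chasles_pos a0 c b0), <- (RInt_Chasles_pos c d b0) by lra.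
      generalize (RInt_pos_ge0 a0 c ltac:(lra)) (RInt_pos_ge0 d b0 ltac:(lra)). unfold m. lra. }
    apply Rabs_lt_between' in Hyl. lra.
Qed.

End ImproperIntegral.

Lemma is_RInt_gen_ext_R (f g : R -> R) (l : R) : (forall t, f t = g t) ->
  is_RInt_gen f (at_right 0) (Rbar_locally p_infty) l ->
  is_RInt_gen g (at_right 0) (Rbar_locally p_infty) l.
Proof.
  intros H. apply is_RInt_gen_ext.
  apply Filter_prod with (Q := fun _ => True) (R := fun _ => True); try apply filter_true.
  intros; auto.
Qed.

Lemma is_RInt_gen_abs_le (f g : R -> R) (lf lg : R) :
  (forall t, 0 < t -> Rabs (f t) <= g t) ->
  is_RInt_gen f (at_right 0) (Rbar_locally p_infty) lf ->
  is_RInt_gen g (at_right 0) (Rbar_locally p_infty) lg ->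
  Rabs lf <= lg.
Proof.
  intros H Hf Hg.
  apply (RInt_gen_norm (V := R_CompleteNormedModule) (Fa := at_right 0) (Fb := Rbar_locally p_infty)
           f g lf lg); auto.
  - apply Filter_prod with (Q := fun a => a < 1) (R := fun b => 1 < b).
    + exists (mkposreal 1 Rlt_0_1). intros y Hy _. apply abs_of_ball_R in Hy. simpl in Hy.
      rewrite Rminus_0_r in Hy. apply Rabs_lt_between in Hy. lra.
    + exists 1. auto.
    + intros x y Hx Hy. simpl. lra.
  - apply Filter_prod with (Q := fun a => 0 < a) (R := fun b => True).
    + exists (mkposreal 1 Rlt_0_1). intros y _ Hy. auto.
    + apply filter_true.
    + intros x y Hx _ z Hz. simpl in *. apply H. lra.
Qed.

Lemma exp_le_compat (x y : R) : x <= y -> exp x <= exp y.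
Proof. intros H. destruct (Req_dec x y) as [->|]. lra. apply Rlt_le, exp_increasing. lra. Qed.

Lemma exp_pow_INR (x : R) (m : nat) : exp x ^ m = exp (INR m * x).
Proof.
  induction m. simpl. rewrite Rmult_0_l, exp_0. reflexivity.
  rewrite S_INR, <- tech_pow_Rmult, IHm, <- exp_plus. f_equal. ring.
Qed.

Lemma pow_le_exp_half (m : nat) : exists C, 0 < C /\ forall t, 0 <= t -> t ^ m <= C * exp (t / 2).
Proof.
  destruct m as [|m].
  { exists 1. split. lra. intros t Ht. simpl. generalize (exp_ineq1_le (t / 2)). lra. }
  set (n := INR (S m)). assert (Hn : 0 < n) by (apply lt_0_INR; lia).
  exists ((2 * n) ^ S m). split. apply pow_lt. lra.
  intros t Ht.
  replace t with ((2 * n) * (t / (2 * n))) at 1 by (field; lra).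
  rewrite Rpow_mult_distr. apply Rmult_le_compat_l. apply pow_le. lra.
  replace (t / 2) with (n * (t / (2 * n))) by (field; lra).
  unfold n. rewrite <- exp_pow_INR. apply pow_incr. split.
  - apply Rmult_le_pos; [lra | apply Rlt_le, Rinv_0_lt_compat]. unfold n in Hn; lra.
  - generalize (exp_ineq1_le (t / (2 * INR (S m)))). fold n. lra.
Qed.

Lemma ln_le_self (t : R) : 0 < t -> ln t <= t.
Proof. intros Ht. generalize (exp_ineq1_le (ln t)). rewrite exp_ln by auto. lra. Qed.

Lemma exp_sub1_abs_le (y : R) : Rabs (exp y - 1) <= Rabs y * exp (Rabs y).
Proof.
  replace (Rabs y * exp (Rabs y)) with (exp (Rabs y) * Rabs (y - 0)) by (rewrite Rminus_0_r; ring).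
  rewrite <- exp_0 at 1.
  apply (MVT_abs_le exp exp). intros; apply is_derive_exp.
  intros c Hc. rewrite Rabs_pos_eq by apply Rlt_le, exp_pos. apply exp_le_compat.
  generalize (Rmax_l 0 y) (Rmax_r 0 y). unfold Rabs; destruct Rcase_abs; unfold Rmax in *;
  destruct Rle_dec; lra.
Qed.

Lemma exp_Taylor1_abs_le (x : R) : Rabs (exp x - 1 - x) <= x ^ 2 * exp (Rabs x).
Proof.
  replace (exp x - 1 - x) with ((fun y => exp y - 1 - y) x - (fun y => exp y - 1 - y) 0)
    by (simpl; rewrite exp_0; ring).
  replace (x ^ 2 * exp (Rabs x)) with ((Rabs x * exp (Rabs x)) * Rabs (x - 0))
    by (rewrite Rminus_0_r, <- (pow2_abs x); ring).
  apply (MVT_abs_le (fun y => exp y - 1 - y) (fun y => exp y - 1)).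
  - intros c _. eapply is_derive_val. apply is_derive_Rminus. apply is_derive_Rminus.
    apply is_derive_exp. apply is_derive_Rconst. apply is_derive_Rid. Req. ring.
  - intros c Hc. assert (Hcx : Rabs c <= Rabs x).
    { generalize (Rmin_l 0 x) (Rmin_r 0 x) (Rmax_l 0 x) (Rmax_r 0 x).
      unfold Rmin, Rmax, Rabs in *. repeat destruct Rle_dec; repeat destruct Rcase_abs; lra. }
    eapply Rle_trans. apply exp_sub1_abs_le.
    apply Rmult_le_compat; auto. apply Rabs_pos. apply Rlt_le, exp_pos. apply exp_le_compat; auto.
Qed.

Definition moment_integrand (a : R) (k : nat) (u t : R) : R :=
  Rpower t a * (t ^ k * exp (- t ^ 2 / 2 - u * t)).

Definition moment (a : R) (k : nat) (u : R) : R :=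
  RInt_gen (moment_integrand a k u) (at_right 0) (Rbar_locally p_infty).

Lemma continuous_moment_integrand (a : R) (k : nat) (u t : R) : 0 < t ->
  continuous (moment_integrand a k u) t.
Proof.
  intros Ht. unfold moment_integrand. apply continuous_Rmult. apply continuous_Rpower; auto.
  apply continuous_Rmult. apply continuous_Rpow, continuous_Rid.
  apply (continuous_Rcomp exp (fun t => - t ^ 2 / 2 - u * t)); [| apply continuous_exp].
  apply continuous_Rminus.
  - apply (continuous_Rext (fun t => (-1/2) * (t ^ 2))). intros; field.
    apply continuous_Rmult. apply continuous_Rconst. apply continuous_Rpow, continuous_Rid.
  - apply continuous_Rmult. apply continuous_Rconst. apply continuous_Rid.
Qed.

Lemma moment_integrand_pos (a : R) (k : nat) (u t : R) : 0 < t -> 0 < moment_integrand a k u t.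
Proof.
  intros Ht. unfold moment_integrand. apply Rmult_lt_0_compat. apply Rpower_pos.
  apply Rmult_lt_0_compat. apply pow_lt; auto. apply exp_pos.
Qed.

Lemma moment_integrand_le_tail (a : R) (k : nat) (u : R) : exists M, 0 <= M /\
  forall t, 1 <= t -> moment_integrand a k u t <= M * exp (- t / 2).
Proof.
  destruct (pow_le_exp_half k) as [C [HC HCb]].
  set (b := Rabs a + 1 - u).
  exists (C * exp (b ^ 2 / 2)). split. generalize (exp_pos (b ^ 2 / 2)). nra.
  intros t Ht. unfold moment_integrand.
  assert (H1 : Rpower t a <= exp (Rabs a * t)).
  { apply exp_le_compat.
    assert (0 <= ln t) by (rewrite <- ln_1; apply ln_le; lra).
    assert (ln t <= t) by (apply ln_le_self; lra).
    apply Rle_trans with (Rabs a * ln t). apply Rmult_le_compat_r; auto. apply Rle_abs.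
    apply Rmult_le_compat_l; auto. apply Rabs_pos. }
  apply Rle_trans with (exp (Rabs a * t) * (C * exp (t / 2) * exp (- t ^ 2 / 2 - u * t))).
  { apply Rmult_le_compat; auto. apply Rlt_le, Rpower_pos.
    apply Rmult_le_pos. apply pow_le; lra. apply Rlt_le, exp_pos.
    apply Rmult_le_compat_r. apply Rlt_le, exp_pos. apply HCb. lra. }
  replace (exp (Rabs a * t) * (C * exp (t / 2) * exp (- t ^ 2 / 2 - u * t)))
    with (C * exp (- t ^ 2 / 2 + b * t) * exp (- t / 2)).
  2: { rewrite Rmult_assoc, <- !exp_plus.
       replace (exp (Rabs a * t) * (C * exp (t / 2) * exp (- t ^ 2 / 2 - u * t))) with
         (C * (exp (Rabs a * t) * exp (t / 2) * exp (- t ^ 2 / 2 - u * t))) by ring.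
       rewrite <- !exp_plus. f_equal. f_equal. unfold b. field. }
  apply Rmult_le_compat_r. apply Rlt_le, exp_pos.
  apply Rmult_le_compat_l. lra. apply exp_le_compat.
  assert (0 <= (t - b) ^ 2) by apply pow2_ge_0. nra.
Qed.

Lemma moment_integrand_le_head (a : R) (k : nat) (u t : R) : 0 < t <= 1 ->
  moment_integrand a k u t <= exp (Rabs u) * Rpower t a.
Proof.
  intros Ht. unfold moment_integrand. rewrite Rmult_comm.
  apply Rmult_le_compat_r. apply Rlt_le, Rpower_pos.
  rewrite <- (Rmult_1_l (exp (Rabs u))).
  apply Rmult_le_compat. apply pow_le; lra. apply Rlt_le, exp_pos.
  rewrite <- (pow1 k). apply pow_incr. lra.
  apply exp_le_compat.
  assert (- u * t <= Rabs u).
  { apply Rle_trans with (Rabs u * t).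
    - rewrite <- Rabs_Ropp. apply Rmult_le_compat_r. lra. apply Rle_abs.
    - rewrite <- (Rmult_1_r (Rabs u)) at 2. apply Rmult_le_compat_l. apply Rabs_pos. lra. }
  assert (0 <= t ^ 2) by apply pow2_ge_0. lra.
Qed.

Lemma is_RInt_gen_moment (a : R) (k : nat) (u : R) : -1 < a ->
  is_RInt_gen (moment_integrand a k u) (at_right 0) (Rbar_locally p_infty) (moment a k u).
Proof.
  intros Ha.
  destruct (moment_integrand_le_tail a k u) as [M [HM HMb]].
  destruct (ex_RInt_gen_dominated (moment_integrand a k u) (continuous_moment_integrand a k u)
              (fun t Ht => Rlt_le _ _ (moment_integrand_pos a k u t Ht)) a M (exp (Rabs u)) Ha HM
              (Rlt_le _ _ (exp_pos _)) HMb (moment_integrand_le_head a k u)) as [l Hl].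
  unfold moment. rewrite (is_RInt_gen_unique _ l Hl). exact Hl.
Qed.

Lemma moment_pos (a : R) (k : nat) (u : R) : -1 < a -> 0 < moment a k u.
Proof.
  intros Ha. apply (is_RInt_gen_pos (moment_integrand a k u) (continuous_moment_integrand a k u)
    (fun t Ht => Rlt_le _ _ (moment_integrand_pos a k u t Ht)) _ 1 2).
  apply is_RInt_gen_moment; auto. lra. intros; apply moment_integrand_pos; lra.
Qed.

Lemma moment_Taylor_bound (a : R) (k : nat) (u h : R) : -1 < a -> Rabs h <= 1 ->
  Rabs (moment a k (u + h) - moment a k u - (- moment a (S k) u) * h)
    <= moment a (S (S k)) (u - 1) * h ^ 2.
Proof.
  intros Ha Hh.
  assert (HG : is_RInt_gen (fun t => moment_integrand a k (u + h) t - moment_integrand a k u t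
                                     + h * moment_integrand a (S k) u t)
     (at_right 0) (Rbar_locally p_infty) (moment a k (u + h) - moment a k u + h * moment a (S k) u))
    by exact (is_RInt_gen_plus _ _ _ _ (is_RInt_gen_minus _ _ _ _ (is_RInt_gen_moment a k (u + h) Ha)
       (is_RInt_gen_moment a k u Ha)) (is_RInt_gen_scal _ h _ (is_RInt_gen_moment a (S k) u Ha))).
  assert (HB : is_RInt_gen (fun t => h ^ 2 * moment_integrand a (S (S k)) (u - 1) t)
     (at_right 0) (Rbar_locally p_infty) (h ^ 2 * moment a (S (S k)) (u - 1)))
    by exact (is_RInt_gen_scal _ (h ^ 2) _ (is_RInt_gen_moment a (S (S k)) (u - 1) Ha)).
  replace (moment a k (u + h) - moment a k u - (- moment a (S k) u) * h)
    with (moment a k (u + h) - moment a k u + h * moment a (S k) u) by ring.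
  rewrite (Rmult_comm (moment a (S (S k)) (u - 1))). refine (is_RInt_gen_abs_le _ _ _ _ _ HG HB).
  intros t Ht. unfold moment_integrand.
  set (P := Rpower t a * t ^ k * exp (- t ^ 2 / 2 - u * t)).
  assert (HP : 0 <= P).
  { unfold P. apply Rmult_le_pos. apply Rmult_le_pos. apply Rlt_le, Rpower_pos. apply pow_le; lra.
    apply Rlt_le, exp_pos. }
  replace (- t ^ 2 / 2 - (u + h) * t) with ((- t ^ 2 / 2 - u * t) + (- h * t)) by ring.
  replace (- t ^ 2 / 2 - (u - 1) * t) with ((- t ^ 2 / 2 - u * t) + t) by ring.
  rewrite !exp_plus.
  replace (Rpower t a * (t ^ k * (exp (- t ^ 2 / 2 - u * t) * exp (- h * t))) -
           Rpower t a * (t ^ k * exp (- t ^ 2 / 2 - u * t)) +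
           h * (Rpower t a * (t ^ S k * exp (- t ^ 2 / 2 - u * t))))
    with (P * (exp (- h * t) - 1 - (- h * t))) by (unfold P; simpl; ring).
  replace (h ^ 2 * (Rpower t a * (t ^ S (S k) * (exp (- t ^ 2 / 2 - u * t) * exp t))))
    with (P * ((- h * t) ^ 2 * exp t)) by (unfold P; simpl; ring).
  rewrite Rabs_mult, Rabs_pos_eq by auto.
  apply Rmult_le_compat_l; auto.
  eapply Rle_trans. apply exp_Taylor1_abs_le.
  apply Rmult_le_compat_l. apply pow2_ge_0. apply exp_le_compat.
  rewrite Rabs_mult, (Rabs_pos_eq t), Rabs_Ropp by lra.
  rewrite <- (Rmult_1_l t) at 2. apply Rmult_le_compat_r; lra.
Qed.

Lemma is_derive_moment (a : R) (k : nat) (u : R) : -1 < a ->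
  is_derive (moment a k) u (- moment a (S k) u).
Proof.
  intros Ha. apply (is_derive_of_quadratic_remainder _ _ _ (moment a (S (S k)) (u - 1))).
  apply Rlt_le, moment_pos; auto.
  intros h Hh. apply moment_Taylor_bound; auto.
Qed.

Lemma moment_quadratic_pos (a u s : R) : -1 < a ->
  0 < moment a 0 u - 2 * s * moment a 1 u + s ^ 2 * moment a 2 u.
Proof.
  intros Ha.
  set (g := fun t => moment_integrand a 0 u t - 2 * s * moment_integrand a 1 u t
                     + s ^ 2 * moment_integrand a 2 u t).
  assert (Hg : forall t, g t = Rpower t a * exp (- t ^ 2 / 2 - u * t) * (1 - s * t) ^ 2)
    by (intros t; unfold g, moment_integrand; simpl; ring).
  assert (HG : is_RInt_gen g (at_right 0) (Rbar_locally p_infty)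
                 (moment a 0 u - 2 * s * moment a 1 u + s ^ 2 * moment a 2 u))
    by exact (is_RInt_gen_plus _ _ _ _ (is_RInt_gen_minus _ _ _ _ (is_RInt_gen_moment a 0 u Ha)
       (is_RInt_gen_scal _ (2 * s) _ (is_RInt_gen_moment a 1 u Ha)))
       (is_RInt_gen_scal _ (s ^ 2) _ (is_RInt_gen_moment a 2 u Ha))).
  set (d := / (Rabs s + 1)).
  assert (Hs := Rabs_pos s).
  assert (Hd : 0 < d) by (apply Rinv_0_lt_compat; lra).
  assert (Hsd : Rabs s * d < 1).
  { unfold d. apply Rmult_lt_reg_r with (Rabs s + 1). lra. rewrite Rmult_assoc, Rinv_l by lra. lra.
    }
  apply (is_RInt_gen_pos g) with (d / 2) d; auto; try lra.
  - intros t Ht. unfold g. apply continuous_Rplus. apply continuous_Rminus.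
    apply continuous_moment_integrand; auto.
    apply continuous_Rmult. apply continuous_Rconst. apply continuous_moment_integrand; auto.
    apply continuous_Rmult. apply continuous_Rconst. apply continuous_moment_integrand; auto.
  - intros t Ht. rewrite Hg. apply Rmult_le_pos. apply Rmult_le_pos.
    apply Rlt_le, Rpower_pos. apply Rlt_le, exp_pos. apply pow2_ge_0.
  - intros t Ht. rewrite Hg. apply Rmult_lt_0_compat. apply Rmult_lt_0_compat.
    apply Rpower_pos. apply exp_pos.
    assert (Hst : Rabs (s * t) < 1).
    { rewrite Rabs_mult, (Rabs_pos_eq t) by lra. apply Rle_lt_trans with (Rabs s * d); auto.
      apply Rmult_le_compat_l; lra. }
    apply Rabs_lt_between in Hst. apply pow_lt. lra.
Qed.

Lemma moment_Cauchy_Schwarz (a u : R) : -1 < a ->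
  moment a 1 u ^ 2 < moment a 0 u * moment a 2 u.
Proof.
  intros Ha. assert (H2 : 0 < moment a 2 u) by (apply moment_pos; auto).
  assert (H := moment_quadratic_pos a u (moment a 1 u / moment a 2 u) Ha).
  replace (moment a 0 u - 2 * (moment a 1 u / moment a 2 u) * moment a 1 u
           + (moment a 1 u / moment a 2 u) ^ 2 * moment a 2 u)
    with ((moment a 0 u * moment a 2 u - moment a 1 u ^ 2) / moment a 2 u) in H by (field; lra).
  apply (Rmult_lt_compat_r (moment a 2 u)) in H; auto.
  unfold Rdiv in H. rewrite Rmult_0_l, Rmult_assoc, Rinv_l, Rmult_1_r in H by lra. lra.
Qed.

Definition psi_a (p : Params) : R := - (- p_rho p / p_kappa p) - 1.
Definition psi_lambda (p : Params) : R := sqrt (2 * p_kappa p) / p_sigma p.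
Definition psi_Gamma (p : Params) : R := Gamma_fn (- (- p_rho p / p_kappa p)).
Definition psi_arg (p : Params) (x : R) : R := - (x - p_mu p) / p_sigma p * sqrt (2 * p_kappa p).

Section PsiMoments.
Variable p : Params.
Hypothesis kappa_pos : 0 < p_kappa p.
Hypothesis sigma_pos : 0 < p_sigma p.
Hypothesis rho_pos : 0 < p_rho p.

Lemma psi_a_gt : -1 < psi_a p.
Proof. unfold psi_a. assert (0 < p_rho p / p_kappa p) by (apply Rdiv_lt_0_compat; auto). lra. Qed.

Lemma psi_lambda_pos : 0 < psi_lambda p.
Proof. unfold psi_lambda. apply Rdiv_lt_0_compat; auto. apply sqrt_lt_R0. lra. Qed.

Lemma psi_moment (x : R) : psi p x = moment (psi_a p) 0 (psi_arg p x) / psi_Gamma p.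
Proof.
  unfold psi, Dpc.
  assert (HJ : RInt_gen (fun t => Rpower t (- (- p_rho p / p_kappa p) - 1) *
                 exp (- t ^ 2 / 2 - - (x - p_mu p) / p_sigma p * sqrt (2 * p_kappa p) * t))
               (at_right 0) (Rbar_locally p_infty) = moment (psi_a p) 0 (psi_arg p x)).
  { apply is_RInt_gen_unique, (is_RInt_gen_ext_R (moment_integrand (psi_a p) 0 (psi_arg p x))).
    - intros t. unfold moment_integrand, psi_arg, psi_a. simpl. ring.
    - apply is_RInt_gen_moment, psi_a_gt. }
  assert (He : exp (p_kappa p * (x - p_mu p) ^ 2 / (2 * p_sigma p ^ 2)) *
               exp (- (- (x - p_mu p) / p_sigma p * sqrt (2 * p_kappa p)) ^ 2 / 4) = 1).
  { rewrite <- exp_plus, <- exp_0. f_equal.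
    replace ((- (x - p_mu p) / p_sigma p * sqrt (2 * p_kappa p)) ^ 2) with
      ((x - p_mu p) ^ 2 / p_sigma p ^ 2 * sqrt (2 * p_kappa p) ^ 2) by (field; lra).
    rewrite pow2_sqrt by lra. field. lra. }
  rewrite HJ, <- (Rmult_1_l (moment (psi_a p) 0 (psi_arg p x) / _)), <- He at 1.
  unfold psi_arg, psi_Gamma, Rdiv. ring.
Qed.

Lemma is_derive_psi_arg (x : R) : is_derive (psi_arg p) x (- psi_lambda p).
Proof.
  unfold psi_arg, psi_lambda.
  apply (is_derive_Rext (fun s => (- sqrt (2 * p_kappa p) / p_sigma p) * s
                                  + p_mu p / p_sigma p * sqrt (2 * p_kappa p))).
  intros; unfold Rdiv; ring.
  eapply is_derive_val. apply is_derive_affine. unfold Rdiv; ring.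
Qed.

Lemma is_derive_scaled_moment (k : nat) (x : R) :
  is_derive (fun y => psi_lambda p ^ k * moment (psi_a p) k (psi_arg p y) / psi_Gamma p) x
    (psi_lambda p ^ S k * moment (psi_a p) (S k) (psi_arg p x) / psi_Gamma p).
Proof.
  apply (is_derive_Rext (fun y => (psi_lambda p ^ k / psi_Gamma p) * moment (psi_a p) k (psi_arg p y))).
  intros; Req; unfold Rdiv; ring.
  eapply is_derive_val. apply is_derive_Rscal, (is_derive_Rcomp (moment (psi_a p) k) (psi_arg p)).
  apply is_derive_moment, psi_a_gt. apply is_derive_psi_arg.
  Req. simpl. unfold Rdiv. ring.
Qed.

Lemma dpsi_moment (k : nat) (x : R) :
  dpsi p k x = psi_lambda p ^ k * moment (psi_a p) k (psi_arg p x) / psi_Gamma p.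
Proof.
  revert x. induction k; intros x.
  - unfold dpsi. simpl. rewrite psi_moment. unfold Rdiv; ring.
  - unfold dpsi in *. simpl. rewrite (Derive_ext _ _ x IHk).
    apply is_derive_unique, is_derive_scaled_moment.
Qed.

Lemma is_derive_dpsi (k : nat) (x : R) : is_derive (dpsi p k) x (dpsi p (S k) x).
Proof.
  rewrite dpsi_moment. apply (is_derive_Rext _ _ _ _ (fun y => eq_sym (dpsi_moment k y))).
  apply is_derive_scaled_moment.
Qed.

Lemma continuous_dpsi (k : nat) (x : R) : continuous (dpsi p k) x.
Proof. eapply is_derive_Rcontinuous. apply is_derive_dpsi. Qed.

Lemma Qk0_pos (z : R) : psi_Gamma p <> 0 -> 0 < Qk p 0 z.
Proof.
  intros HG. unfold Qk. simpl. rewrite !dpsi_moment.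
  assert (HCS := moment_Cauchy_Schwarz (psi_a p) (psi_arg p z) psi_a_gt).
  set (J := fun k => moment (psi_a p) k (psi_arg p z)).
  change (J 1%nat ^ 2 < J 0%nat * J 2%nat) in HCS.
  assert (Hn : psi_lambda p / psi_Gamma p <> 0).
  { unfold Rdiv. apply Rmult_integral_contrapositive_currified.
    generalize psi_lambda_pos; lra. apply Rinv_neq_0_compat; auto. }
  apply Rlt_le_trans with ((psi_lambda p / psi_Gamma p) ^ 2 * (J 0%nat * J 2%nat - J 1%nat ^ 2)).
  - apply Rmult_lt_0_compat; [| lra]. rewrite <- Rsqr_pow2. apply Rsqr_pos_lt; auto.
  - right. unfold J. field. auto.
Qed.

End PsiMoments.

Lemma deriv_within_elim (f : R -> R) (a b y l : R) : deriv_within f a b y l ->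
  forall eps, 0 < eps -> exists d, 0 < d /\ forall h, h <> 0 -> a <= y + h <= b -> Rabs h < d ->
    Rabs ((f (y + h) - f y) / h - l) < eps.
Proof.
  intros H eps Heps.
  destruct (H _ (locally_ball l (mkposreal eps Heps))) as [d Hd].
  exists d. split. apply cond_pos. intros h Hh Hab Hd'.
  apply abs_of_ball_R. apply Hd. apply ball_R_of_abs. rewrite Rminus_0_r. auto. split; auto.
Qed.

Lemma deriv_within_intro (f : R -> R) (a b y l : R) :
  (forall eps, 0 < eps -> exists d, 0 < d /\ forall h, h <> 0 -> a <= y + h <= b -> Rabs h < d ->
    Rabs ((f (y + h) - f y) / h - l) < eps) -> deriv_within f a b y l.
Proof.
  intros H. unfold deriv_within. apply filterlim_locally. intros eps.
  destruct (H eps (cond_pos eps)) as [d [Hd Hh]].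
  exists (mkposreal d Hd). intros h Hb [Hh0 Hab]. apply abs_of_ball_R in Hb. simpl in Hb.
  rewrite Rminus_0_r in Hb. apply ball_R_of_abs. apply Hh; auto.
Qed.

Lemma deriv_within_continuous (f : R -> R) (a b y l : R) : deriv_within f a b y l ->
  forall eps, 0 < eps -> exists d, 0 < d /\ forall y', a <= y' <= b -> Rabs (y' - y) < d ->
    Rabs (f y' - f y) < eps.
Proof.
  intros H eps Heps. destruct (deriv_within_elim f a b y l H 1 Rlt_0_1) as [d [Hd Hh]].
  assert (Hl : 0 < Rabs l + 1) by (generalize (Rabs_pos l); lra).
  exists (Rmin d (eps / (Rabs l + 1))). split. apply Rmin_pos; auto. apply Rdiv_lt_0_compat; auto.
  intros y' Hy' Hd'.
  destruct (Req_dec y' y) as [->|Hne]. rewrite Rminus_diag, Rabs_R0. auto.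
  set (h := y' - y). assert (Hh0 : h <> 0) by (unfold h; lra).
  assert (Hq := Hh h Hh0 ltac:(unfold h; replace (y + (y' - y)) with y' by ring; auto)
              ltac:(generalize (Rmin_l d (eps / (Rabs l + 1))); unfold h; lra)).
  replace (y + h) with y' in Hq by (unfold h; ring).
  assert (Hq2 : Rabs ((f y' - f y) / h) < Rabs l + 1).
  { replace ((f y' - f y) / h) with (((f y' - f y) / h - l) + l) by ring.
    generalize (Rabs_triang ((f y' - f y) / h - l) l). lra. }
  replace (f y' - f y) with (((f y' - f y) / h) * h) by (field; auto).
  rewrite Rabs_mult.
  assert (Hh2 : Rabs h < eps / (Rabs l + 1)) by (generalize (Rmin_r d (eps / (Rabs l + 1))); unfold h; lra).
  apply Rle_lt_trans with ((Rabs l + 1) * Rabs h).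
  apply Rmult_le_compat_r. apply Rabs_pos. lra.
  apply Rmult_lt_compat_l with (r := Rabs l + 1) in Hh2; auto.
  replace ((Rabs l + 1) * (eps / (Rabs l + 1))) with eps in Hh2 by (field; lra). auto.
Qed.
Lemma is_derive_locally_affine (F : R -> R) (y m c d : R) : 0 < d ->
  (forall y', Rabs (y' - y) < d -> F y' = m * y' + c) -> is_derive F y m.
Proof.
  intros Hd HF. apply is_derive_Reals. intros eps Heps. exists (mkposreal d Hd).
  intros h Hh0 Hh. rewrite !HF by (simpl; try replace (y + h - y) with h by ring;
    rewrite ?Rminus_diag, ?Rabs_R0; auto).
  replace ((m * (y + h) + c - (m * y + c)) / h - m) with 0 by (field; auto).
  rewrite Rabs_R0. auto.
Qed.

Lemma is_derive_of_one_sided (F : R -> R) (y l : R) :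
  (forall eps, 0 < eps -> exists d, 0 < d /\
     forall h, 0 < h < d -> Rabs ((F (y + h) - F y) / h - l) < eps) ->
  (forall eps, 0 < eps -> exists d, 0 < d /\
     forall h, 0 < h < d -> Rabs ((F (y - h) - F y) / (- h) - l) < eps) ->
  is_derive F y l.
Proof.
  intros Hr Hl. apply is_derive_Reals. intros eps Heps.
  destruct (Hr eps Heps) as [d1 [Hd1 H1]]. destruct (Hl eps Heps) as [d2 [Hd2 H2]].
  exists (mkposreal (Rmin d1 d2) (Rmin_pos _ _ Hd1 Hd2)). intros h Hh0 Hh. simpl in Hh.
  assert (Hm1 := Rmin_l d1 d2). assert (Hm2 := Rmin_r d1 d2).
  apply Rabs_lt_between in Hh.
  destruct (Rlt_le_dec 0 h) as [Hp|Hn].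
  - apply H1. lra.
  - replace (y + h) with (y - - h) by ring. replace h with (- - h) at 2 by ring. apply H2. lra.
Qed.

Definition clamp (a b y : R) : R := Rmax a (Rmin b y).

Section Clamp.
Variables a b : R.
Hypothesis a_le_b : a <= b.

Lemma clamp_range (y : R) : a <= clamp a b y <= b.
Proof. unfold clamp. split. apply Rmax_l. apply Rmax_lub. lra. apply Rmin_l. Qed.
Lemma clamp_id (y : R) : a <= y <= b -> clamp a b y = y.
Proof. intros H. unfold clamp. rewrite Rmin_right, Rmax_right; lra. Qed.
Lemma clamp_lo (y : R) : y <= a -> clamp a b y = a.
Proof. intros. unfold clamp. rewrite Rmin_right, Rmax_left; lra. Qed.
Lemma clamp_hi (y : R) : b <= y -> clamp a b y = b.
Proof. intros. unfold clamp. rewrite Rmin_left, Rmax_right; lra. Qed.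

Lemma clamp_Lipschitz (y y' : R) : Rabs (clamp a b y' - clamp a b y) <= Rabs (y' - y).
Proof.
  unfold clamp, Rmax, Rmin.
  repeat destruct Rle_dec; unfold Rabs; repeat destruct Rcase_abs; lra.
Qed.

Lemma continuous_clamp (y : R) : continuous (clamp a b) y.
Proof.
  apply continuous_R_eps. intros eps Heps. exists eps. split; auto.
  intros y' Hy'. generalize (clamp_Lipschitz y y'). lra.
Qed.

Lemma continuous_clamp_comp (f : R -> R) (y : R) :
  (forall y0, a <= y0 <= b -> forall eps, 0 < eps -> exists d, 0 < d /\
     forall y', a <= y' <= b -> Rabs (y' - y0) < d -> Rabs (f y' - f y0) < eps) ->
  continuous (fun t => f (clamp a b t)) y.
Proof.
  intros Hf. apply continuous_R_eps. intros eps Heps.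
  destruct (Hf (clamp a b y) (clamp_range y) eps Heps) as [d [Hd Hh]].
  exists d. split; auto. intros y' Hy'. apply Hh. apply clamp_range.
  generalize (clamp_Lipschitz y y'). lra.
Qed.

End Clamp.

Section LinearExtension.
Variables (f g : R -> R) (a b : R).
Hypothesis a_lt_b : a < b.
Hypothesis f_deriv : forall y, a <= y <= b -> deriv_within f a b y (g y).

Definition linext (y : R) : R := f (clamp a b y) + g a * Rmin (y - a) 0 + g b * Rmax (y - b) 0.

Lemma linext_in (y : R) : a <= y <= b -> linext y = f y.
Proof. intros Hy. unfold linext. rewrite clamp_id, Rmin_right, Rmax_right; lra. Qed.
Lemma linext_lo (y : R) : y <= a -> linext y = f a + g a * (y - a).
Proof. intros Hy. unfold linext. rewrite clamp_lo, Rmin_left, Rmax_right; lra. Qed.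
Lemma linext_hi (y : R) : b <= y -> linext y = f b + g b * (y - b).
Proof. intros Hy. unfold linext. rewrite clamp_hi, Rmin_right, Rmax_left; lra. Qed.

Lemma linext_right_quotient (y : R) : a <= y <= b -> forall eps, 0 < eps -> exists d, 0 < d /\
  forall h, 0 < h < d -> Rabs ((linext (y + h) - linext y) / h - g y) < eps.
Proof.
  intros Hy eps Heps. destruct (Req_dec y b) as [->|Hyb].
  - exists 1. split. lra. intros h Hh.
    rewrite linext_hi, linext_in by lra.
    replace ((f b + g b * (b + h - b) - f b) / h - g b) with 0 by (field; lra).
    rewrite Rabs_R0. auto.
  - destruct (deriv_within_elim f a b y (g y) (f_deriv y Hy) eps Heps) as [d [Hd Hq]].
    exists (Rmin d (b - y)). split. apply Rmin_pos; lra. intros h Hh.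
    assert (Hm1 := Rmin_l d (b - y)). assert (Hm2 := Rmin_r d (b - y)).
    rewrite !linext_in by lra. apply Hq; try lra. rewrite Rabs_pos_eq; lra.
Qed.

Lemma linext_left_quotient (y : R) : a <= y <= b -> forall eps, 0 < eps -> exists d, 0 < d /\
  forall h, 0 < h < d -> Rabs ((linext (y - h) - linext y) / (- h) - g y) < eps.
Proof.
  intros Hy eps Heps. destruct (Req_dec y a) as [->|Hya].
  - exists 1. split. lra. intros h Hh.
    rewrite linext_lo, linext_in by lra.
    replace ((f a + g a * (a - h - a) - f a) / - h - g a) with 0 by (field; lra).
    rewrite Rabs_R0. auto.
  - destruct (deriv_within_elim f a b y (g y) (f_deriv y Hy) eps Heps) as [d [Hd Hq]].
    exists (Rmin d (y - a)). split. apply Rmin_pos; lra. intros h Hh.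
    assert (Hm1 := Rmin_l d (y - a)). assert (Hm2 := Rmin_r d (y - a)).
    rewrite !linext_in by lra. replace (y - h) with (y + - h) by ring.
    apply Hq; try lra. rewrite Rabs_Ropp, Rabs_pos_eq; lra.
Qed.

Lemma is_derive_linext (y : R) : is_derive linext y (g (clamp a b y)).
Proof.
  destruct (Rlt_le_dec y a) as [Hya|Hay].
  { rewrite clamp_lo by lra.
    apply (is_derive_locally_affine _ _ _ (f a - g a * a) (a - y)); [lra |].
    intros y' Hy'. apply Rabs_lt_between' in Hy'. rewrite linext_lo by lra. ring. }
  destruct (Rlt_le_dec b y) as [Hby|Hyb].
  { rewrite clamp_hi by lra.
    apply (is_derive_locally_affine _ _ _ (f b - g b * b) (y - b)); [lra |].
    intros y' Hy'. apply Rabs_lt_between' in Hy'. rewrite linext_hi by lra. ring. }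
  rewrite clamp_id by lra.
  apply is_derive_of_one_sided; [apply linext_right_quotient | apply linext_left_quotient]; lra.
Qed.

End LinearExtension.

Definition continuous2 (f : R -> R -> R) (x y : R) : Prop :=
  continuous (fun q : R * R => f (fst q) (snd q)) (x, y).

Lemma continuous2_elim (f : R -> R -> R) (x y : R) : continuous2 f x y ->
  forall eps, 0 < eps -> exists d, 0 < d /\ forall x' y', Rabs (x' - x) < d -> Rabs (y' - y) < d ->
    Rabs (f x' y' - f x y) < eps.
Proof.
  intros H eps Heps.
  destruct (H _ (locally_ball (f x y) (mkposreal eps Heps))) as [d Hd].
  exists d. split. apply cond_pos. intros x' y' H1 H2.
  apply abs_of_ball_R. apply (Hd (x', y')). split; apply ball_R_of_abs; auto.
Qed.

Lemma continuous2_intro (f : R -> R -> R) (x y : R) :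
  (forall eps, 0 < eps -> exists d, 0 < d /\ forall x' y', Rabs (x' - x) < d -> Rabs (y' - y) < d ->
    Rabs (f x' y' - f x y) < eps) -> continuous2 f x y.
Proof.
  intros H. unfold continuous2. apply filterlim_locally. intros eps.
  destruct (H eps (cond_pos eps)) as [d [Hd Hh]].
  exists (mkposreal d Hd). intros [x' y'] [H1 H2]. apply ball_R_of_abs. apply Hh.
  apply abs_of_ball_R in H1; auto. apply abs_of_ball_R in H2; auto.
Qed.

Lemma continuous2_of_fst (g : R -> R) (x y : R) : continuous g x -> continuous2 (fun x y => g x) x y.
Proof.
  intros H. apply continuous2_intro. intros eps Heps.
  destruct (H _ (locally_ball (g x) (mkposreal eps Heps))) as [d Hd].
  exists d. split. apply cond_pos. intros x' y' H1 _. apply abs_of_ball_R. apply Hd.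
  apply ball_R_of_abs; auto.
Qed.

Lemma continuous2_of_snd (g : R -> R) (x y : R) : continuous g y -> continuous2 (fun x y => g y) x y.
Proof.
  intros H. apply continuous2_intro. intros eps Heps.
  destruct (H _ (locally_ball (g y) (mkposreal eps Heps))) as [d Hd].
  exists d. split. apply cond_pos. intros x' y' _ H1. apply abs_of_ball_R. apply Hd.
  apply ball_R_of_abs; auto.
Qed.

Lemma continuous2_fst (x y : R) : continuous2 (fun x y => x) x y.
Proof. apply (continuous2_of_fst (fun x => x)). apply continuous_Rid. Qed.
Lemma continuous2_snd (x y : R) : continuous2 (fun x y => y) x y.
Proof. apply (continuous2_of_snd (fun y => y)). apply continuous_Rid. Qed.
Lemma continuous2_const (k x y : R) : continuous2 (fun x y => k) x y.
Proof. apply (continuous2_of_fst (fun x => k)). apply continuous_Rconst. Qed.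

Lemma continuous2_plus (f g : R -> R -> R) x y : continuous2 f x y -> continuous2 g x y ->
  continuous2 (fun x y => f x y + g x y) x y.
Proof.
  intros H1 H2. unfold continuous2 in *.
  apply (@continuous_plus (prod_UniformSpace R_UniformSpace R_UniformSpace) R_AbsRing R_NormedModule
     (fun q : R * R => f (fst q) (snd q)) (fun q : R * R => g (fst q) (snd q)) (x, y) H1 H2).
Qed.
Lemma continuous2_mult (f g : R -> R -> R) x y : continuous2 f x y -> continuous2 g x y ->
  continuous2 (fun x y => f x y * g x y) x y.
Proof.
  intros H1 H2. unfold continuous2 in *.
  apply (@continuous_mult (prod_UniformSpace R_UniformSpace R_UniformSpace) R_AbsRing
     (fun q : R * R => f (fst q) (snd q)) (fun q : R * R => g (fst q) (snd q)) (x, y) H1 H2).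
Qed.
Lemma continuous2_comp (g : R -> R) (f : R -> R -> R) x y : continuous2 f x y -> continuous g (f x y) ->
  continuous2 (fun x y => g (f x y)) x y.
Proof.
  intros H1 H2. unfold continuous2 in *.
  apply (@continuous_comp (prod_UniformSpace R_UniformSpace R_UniformSpace) R_UniformSpace R_UniformSpace
     (fun q : R * R => f (fst q) (snd q)) g (x, y) H1 H2).
Qed.
Lemma continuous2_opp (f : R -> R -> R) x y : continuous2 f x y -> continuous2 (fun x y => - f x y) x y.
Proof.
  intros H. apply (continuous2_comp Ropp f). auto. apply (continuous_Ropp (fun t => t)).
  apply continuous_Rid.
Qed.
Lemma continuous2_minus (f g : R -> R -> R) x y : continuous2 f x y -> continuous2 g x y ->
  continuous2 (fun x y => f x y - g x y) x y.
Proof.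
  intros H1 H2. apply (continuous2_plus f (fun x y => - g x y)); auto.
  apply continuous2_opp; auto.
Qed.
Lemma continuous2_comp2 (g u v : R -> R -> R) x y :
  continuous2 u x y -> continuous2 v x y -> continuous2 g (u x y) (v x y) ->
  continuous2 (fun x y => g (u x y) (v x y)) x y.
Proof.
  intros H1 H2 H3. unfold continuous2 in *.
  apply (@continuous_comp_2 (prod_UniformSpace R_UniformSpace R_UniformSpace) R_UniformSpace R_UniformSpace
     R_UniformSpace (fun q : R * R => u (fst q) (snd q)) (fun q : R * R => v (fst q) (snd q)) g (x, y) H1 H2 H3).
Qed.
Lemma continuous2_ext (f g : R -> R -> R) x y : (forall x y, f x y = g x y) ->
  continuous2 f x y -> continuous2 g x y.
Proof.
  intros He H. apply continuous2_intro. intros eps Heps.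
  destruct (continuous2_elim f x y H eps Heps) as [d [Hd Hh]].
  exists d. split; auto. intros. rewrite <- !He. auto.
Qed.

Lemma Rmax_abs (a b : R) : Rmax a b = (a + b + Rabs (a - b)) / 2.
Proof.
  unfold Rmax. destruct (Rle_dec a b).
  rewrite Rabs_left1 by lra. field. rewrite Rabs_pos_eq by lra. field.
Qed.

Lemma continuous2_Rmax (x y : R) : continuous2 Rmax x y.
Proof.
  apply (continuous2_ext (fun x y => (x + y + Rabs (x - y)) * / 2)).
  intros; rewrite Rmax_abs; reflexivity.
  apply continuous2_mult. apply continuous2_plus. apply continuous2_plus. apply continuous2_fst.
  apply continuous2_snd.
  apply (continuous2_comp Rabs (fun x y => x - y)). apply continuous2_minus. apply continuous2_fst.
  apply continuous2_snd.
  apply continuous_Rabs. apply continuous2_const.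
Qed.

Lemma cont_strip_of_continuous2 (f g : R -> R -> R) (yb : R) :
  (forall x y, 0 <= y <= yb -> continuous2 g x y) -> (forall x y, 0 <= y <= yb -> f x y = g x y) ->
  cont_strip f yb.
Proof.
  intros Hc He x y Hy eps Heps.
  destruct (continuous2_elim g x y (Hc x y Hy) eps Heps) as [d [Hd Hh]].
  exists d. split; auto. intros x' y' Hy' H1 H2. rewrite !He by auto. auto.
Qed.

Lemma continuous_comp_continuous2 (g : R -> R -> R) (u v : R -> R) (y : R) :
  continuous u y -> continuous v y -> continuous2 g (u y) (v y) -> continuous (fun y => g (u y) (v y)) y.
Proof.
  intros H1 H2 H3. unfold continuous2 in H3.
  apply (@continuous_comp_2 R_UniformSpace R_UniformSpace R_UniformSpace R_UniformSpace u v g y H1 H2 H3).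
Qed.

Lemma continuous_monotone_onto (g : R -> R) (m M x : R) :
  (forall u v, u <= v -> g u <= g v) -> (forall u, m <= g u <= M) ->
  (forall z, m <= z <= M -> exists u, g u = z) -> continuous g x.
Proof.
  intros Hmono Hrange Honto. apply continuous_R_eps. intros eps Heps.
  assert (Hx := Hrange x).
  assert (Hup : exists d, 0 < d /\ forall x', x' - x < d -> g x' < g x + eps).
  { destruct (Rlt_le_dec M (g x + eps / 2)) as [H1|H1].
    { exists 1. split. lra. intros x' _. generalize (Hrange x'). lra. }
    destruct (Honto (g x + eps / 2)) as [u Hu]. lra.
    assert (x < u) by (destruct (Rlt_le_dec x u) as [|Hux]; auto; generalize (Hmono u x Hux); lra).
    exists (u - x). split. lra. intros x' Hx'. generalize (Hmono x' u ltac:(lra)). lra. }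
  assert (Hlo : exists d, 0 < d /\ forall x', x - x' < d -> g x - eps < g x').
  { destruct (Rlt_le_dec (g x - eps / 2) m) as [H1|H1].
    { exists 1. split. lra. intros x' _. generalize (Hrange x'). lra. }
    destruct (Honto (g x - eps / 2)) as [u Hu]. lra.
    assert (u < x) by (destruct (Rlt_le_dec u x) as [|Hxu]; auto; generalize (Hmono x u Hxu); lra).
    exists (x - u). split. lra. intros x' Hx'. generalize (Hmono u x' ltac:(lra)). lra. }
  destruct Hup as [d1 [Hd1 H1]]. destruct Hlo as [d2 [Hd2 H2]].
  exists (Rmin d1 d2). split. apply Rmin_pos; auto. intros x' Hx'.
  generalize (Rmin_l d1 d2) (Rmin_r d1 d2). intros. apply Rabs_lt_between in Hx'.
  apply Rabs_lt_between'. specialize (H1 x' ltac:(lra)). specialize (H2 x' ltac:(lra)). lra.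
Qed.

Lemma deriv_within_ext_local (f g : R -> R) (a b y l d : R) : 0 < d ->
  (forall t, a <= t <= b -> Rabs (t - y) < d -> f t = g t) -> a <= y <= b ->
  deriv_within f a b y l -> deriv_within g a b y l.
Proof.
  intros Hd Hfg Hy Hf. apply deriv_within_intro. intros eps Heps.
  destruct (deriv_within_elim f a b y l Hf eps Heps) as [d1 [Hd1 H1]].
  exists (Rmin d d1). split. apply Rmin_pos; auto. intros h Hh0 Hyh Hh.
  assert (Hm1 := Rmin_l d d1). assert (Hm2 := Rmin_r d d1).
  rewrite <- !Hfg; try lra; try (rewrite ?Rminus_diag, ?Rabs_R0; lra).
  apply H1; auto; lra. replace (y + h - y) with h by ring. lra.
Qed.

Lemma deriv_within_plus_linear (f : R -> R) (a b y l c : R) : deriv_within f a b y l ->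
  deriv_within (fun t => f t + c * t) a b y (l + c).
Proof.
  intros Hf. apply deriv_within_intro. intros eps Heps.
  destruct (deriv_within_elim f a b y l Hf eps Heps) as [d [Hd H]].
  exists d. split; auto. intros h Hh0 Hyh Hh.
  replace ((f (y + h) + c * (y + h) - (f y + c * y)) / h - (l + c)) with ((f (y + h) - f y) / h - l)
    by (field; auto).
  auto.
Qed.

Lemma deriv_within_of_is_derive (f : R -> R) (a b y l : R) : is_derive f y l -> deriv_within f a b y l.
Proof.
  intros Hf. apply is_derive_Reals in Hf. apply deriv_within_intro. intros eps Heps.
  destruct (Hf eps Heps) as [d Hd]. exists d. split. apply cond_pos. intros h Hh0 _ Hh. auto.
Qed.

Lemma deriv_within_Rmax_flat (phi : R -> R) (a b g y l : R) : y <= g -> is_derive phi y l ->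
  (y = g -> y < b -> l = 0) -> deriv_within (fun t => phi (Rmax t g)) a b y 0.
Proof.
  intros Hyg Hphi Hflat. apply is_derive_Reals in Hphi. apply deriv_within_intro. intros eps Heps.
  destruct (Hphi eps Heps) as [d Hd].
  assert (Hconst : forall h, y + h <= g -> Rabs ((phi (Rmax (y + h) g) - phi (Rmax y g)) / h - 0) < eps).
  { intros h Hh. rewrite !Rmax_right by lra. unfold Rminus. rewrite Rplus_opp_r. unfold Rdiv.
    rewrite Rmult_0_l, Rplus_0_l, Ropp_0, Rabs_R0. auto. }
  destruct (Rlt_le_dec y g) as [Hlt|Hge].
  - exists (g - y). split. lra. intros h _ _ Hh. apply Hconst. apply Rabs_lt_between in Hh. lra.
  - exists d. split. apply cond_pos. intros h Hh0 Hyh Hh.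
    destruct (Rle_lt_dec (y + h) g) as [Hle|Hgt]; auto.
    rewrite Rmax_left, (Rmax_left y g) by lra. rewrite <- (Hflat ltac:(lra) ltac:(lra)). auto.
Qed.

Lemma continuous2_pow2 (f : R -> R -> R) x z : continuous2 f x z ->
  continuous2 (fun x z => f x z ^ 2) x z.
Proof.
  intros H. apply (continuous2_comp (fun t => t ^ 2) f). auto.
  apply continuous_Rpow, continuous_Rid.
Qed.

Lemma continuous2_cutoff (phi : R -> R -> R) (F : R -> R) (x0 y0 : R) :
  continuous2 phi x0 y0 -> continuous F y0 -> (x0 = F y0 -> phi x0 y0 = 0) ->
  continuous2 (fun x y => if Rlt_dec x (F y) then phi x y else 0) x0 y0.
Proof.
  intros Hphi HF Hz. apply continuous2_intro. intros eps Heps.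
  destruct (continuous2_elim phi x0 y0 Hphi eps Heps) as [d1 [Hd1 H1]].
  destruct (Req_dec x0 (F y0)) as [E|E].
  - specialize (Hz E).
    exists d1. split; auto. intros x' y' Hx' Hy'. specialize (H1 x' y' Hx' Hy'). rewrite Hz in H1.
    destruct (Rlt_dec x0 (F y0)); [lra |]. destruct (Rlt_dec x' (F y')).
    + rewrite Rminus_0_r in *. auto.
    + rewrite Rminus_diag, Rabs_R0. auto.
  - assert (HG : continuous2 (fun x y => F y - x) x0 y0)
      by (apply continuous2_minus; [apply (continuous2_of_snd F); auto | apply continuous2_fst]).
    assert (Hgap : 0 < Rabs (F y0 - x0)) by (apply Rabs_pos_lt; lra).
    destruct (continuous2_elim _ x0 y0 HG _ Hgap) as [d2 [Hd2 H2]].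
    exists (Rmin d1 d2). split. apply Rmin_pos; auto. intros x' y' Hx' Hy'.
    assert (Hm1 := Rmin_l d1 d2). assert (Hm2 := Rmin_r d1 d2).
    specialize (H2 x' y' ltac:(lra) ltac:(lra)).
    specialize (H1 x' y' ltac:(lra) ltac:(lra)).
    destruct (Rlt_dec x0 (F y0)) as [L0|L0]; destruct (Rlt_dec x' (F y')) as [L1|L1]; auto.
    + rewrite (Rabs_pos_eq (F y0 - x0)) in H2 by lra. apply Rabs_lt_between' in H2. lra.
    + rewrite (Rabs_left1 (F y0 - x0)) in H2 by lra. apply Rabs_lt_between' in H2. lra.
    + rewrite Rminus_diag, Rabs_R0. auto.
Qed.

Lemma bounded_on_segment (f : R -> R) (a b : R) : a <= b -> (forall t, a <= t <= b -> continuous f t) ->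
  exists B, 0 <= B /\ forall t, a <= t <= b -> Rabs (f t) <= B.
Proof.
  intros Hab Hcf.
  destruct (continuity_ab_maj (fun t => Rabs (f t)) a b Hab) as [m [Hm Hmr]].
  { intros c Hcr. apply continuity_pt_filterlim, (continuous_Rabs_comp f c), Hcf; auto. }
  exists (Rabs (f m)). split. apply Rabs_pos. auto.
Qed.

(* An envelope-type argument: the inner argument [M s] is only continuous, but moving it costs
   [o(|s - x|)] because [Psi] is flat in its second variable to first order. *)
Lemma is_derive_envelope (Psi Psix Psiz : R -> R -> R) (M : R -> R) (x L : R) : 0 <= L ->
  is_derive (fun s => Psi s (M x)) x (Psix x (M x)) ->
  (forall x' z, Rabs (x' - x) <= 1 -> Rmin (M x) (M x') <= z <= Rmax (M x) (M x') ->
     is_derive (fun z => Psi x' z) z (Psiz x' z)) ->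
  (forall x' z, Rabs (x' - x) <= 1 -> M x <> M x' -> Rmin (M x) (M x') <= z <= Rmax (M x) (M x') ->
     Rabs (Psiz x' z) <= L * Rabs (x' - x)) ->
  continuous M x ->
  is_derive (fun s => Psi s (M s)) x (Psix x (M x)).
Proof.
  intros HL Hx Hz Hflat HM.
  apply is_derive_Reals. apply is_derive_Reals in Hx. intros eps Heps.
  destruct (Hx (eps / 2) ltac:(lra)) as [d1 Hd1].
  set (e2 := eps / (2 * (L + 1))).
  assert (He2 : 0 < e2) by (apply Rdiv_lt_0_compat; lra).
  assert (HLe2 : L * e2 <= eps / 2).
  { unfold e2. replace (L * (eps / (2 * (L + 1)))) with (eps / 2 * (L / (L + 1))) by (field; lra).
    rewrite <- (Rmult_1_r (eps / 2)) at 2. apply Rmult_le_compat_l. lra.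
    apply Rmult_le_reg_r with (L + 1). lra. unfold Rdiv. rewrite Rmult_assoc, Rinv_l by lra. lra. }
  apply continuity_pt_filterlim in HM. destruct (HM e2 He2) as [d2 [Hd2 HM2]].
  assert (Hd : 0 < Rmin 1 (Rmin d1 d2)) by (apply Rmin_pos; [lra | apply Rmin_pos; [apply cond_pos | auto]]).
  exists (mkposreal _ Hd). intros h Hh0 Hh. simpl in Hh.
  assert (Hm1 := Rmin_l 1 (Rmin d1 d2)). assert (Hm2 := Rmin_r 1 (Rmin d1 d2)).
  assert (Hm3 := Rmin_l d1 d2). assert (Hm4 := Rmin_r d1 d2).
  assert (Hxh : Rabs (x + h - x) <= 1) by (replace (x + h - x) with h by ring; lra).
  assert (HMM : Rabs (M (x + h) - M x) <= e2).
  { apply Rlt_le, (HM2 (x + h)). split. split. exact I. intros E; apply Hh0; lra.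
    change (Rabs (x + h - x) < d2). replace (x + h - x) with h by ring. lra. }
  assert (Hinner : Rabs (Psi (x + h) (M (x + h)) - Psi (x + h) (M x))
                   <= L * Rabs h * Rabs (M (x + h) - M x)).
  { destruct (Req_dec (M x) (M (x + h))) as [E|E].
    - rewrite E, !Rminus_diag, Rabs_R0, Rmult_0_r. lra.
    - apply (MVT_abs_le (fun z => Psi (x + h) z) (fun z => Psiz (x + h) z)).
      + intros; apply Hz; auto.
      + intros z Hz'. replace h with (x + h - x) at 2 by ring. apply Hflat; auto. }
  assert (Hah : 0 < Rabs h) by (apply Rabs_pos_lt; auto).
  assert (Hq : Rabs ((Psi (x + h) (M (x + h)) - Psi (x + h) (M x)) / h) <= eps / 2).
  { unfold Rdiv. rewrite Rabs_mult, Rabs_inv.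
    apply Rmult_le_reg_r with (Rabs h); auto. rewrite Rmult_assoc, Rinv_l by lra.
    assert (0 <= L * Rabs h) by (apply Rmult_le_pos; lra). nra. }
  assert (Houter := Hd1 h Hh0 ltac:(lra)).
  replace ((Psi (x + h) (M (x + h)) - Psi x (M x)) / h - Psix x (M x)) with
    ((Psi (x + h) (M (x + h)) - Psi (x + h) (M x)) / h
     + ((Psi (x + h) (M x) - Psi x (M x)) / h - Psix x (M x)))
    by (field; auto).
  eapply Rle_lt_trans. apply Rabs_triang. lra.
Qed.

(* The two smooth-fit identities at a point of the free boundary, written with [p_k] for
   [psi^(k)(F~ z)], [r] for [R~(F~ z, z)] and [g] for [F~'(z) = G(z, F~ z)]; they are the
   vanishing of [Phi_z] and [Phi_xz] there. *)
Lemma smooth_fit_algebra (rho kappa beta c r p0 p1 p2 p3 g : R) :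
  rho <> 0 -> rho + kappa <> 0 -> beta <> 0 -> p0 * p2 - p1 ^ 2 <> 0 -> p0 <> 0 ->
  (rho + kappa) * (c - r) * (p1 * p3 - p2 ^ 2) + (p0 * p3 - p1 * p2) <> 0 ->
  g = beta * ((p0 * p2 - p1 ^ 2) * ((rho + 2 * kappa) / rho * p1 + (rho + kappa) * (c - r) * p2 + p1))
      / (p0 * ((rho + kappa) * (c - r) * (p1 * p3 - p2 ^ 2) + (p0 * p3 - p1 * p2))) ->
  let num := p1 * (c - r) + / (rho + kappa) * p0 in
  let den := - beta * (p0 * p2 - p1 ^ 2) in
  let dr := (rho * g - beta * (rho + 2 * kappa)) / (rho * (rho + kappa)) in
  let dnum := p2 * g * (c - r) + p1 * (- dr) + / (rho + kappa) * (p1 * g) in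
  let dden := - beta * ((p0 * p3 - p1 * p2) * g) in
  let dA := (dnum * den - num * dden) / den ^ 2 in
  let A := num / den in
  dA * p0 + A * beta * p1 + r - c = 0 /\ dA * p1 + A * beta * p2 + / (rho + kappa) = 0.
Proof.
  intros H1 H2 H3 H4 H5 H6 Hg. intros. subst num den dr dnum dden dA A. rewrite Hg.
  split; field; repeat split; auto.
Qed.

Section ValueFunction.
Variable p : Params.
Local Notation mu := (p_mu p).
Local Notation ka := (p_kappa p).
Local Notation rh := (p_rho p).
Local Notation be := (p_beta p).
Local Notation cc := (p_c p).
Local Notation yb := (p_ybar p).
Local Notation ps := (dpsi p).
Hypothesis kappa_pos : 0 < ka.
Hypothesis sigma_pos : 0 < p_sigma p.
Hypothesis rho_pos : 0 < rh.
Hypothesis beta_pos : 0 < be.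
Hypothesis ybar_pos : 0 < yb.
Variable Ft : R -> R.
Hypothesis Ft_ybar : Hfun p (Ft yb) = 0.
Hypothesis Ft_ode : forall y, 0 <= y <= yb ->
  Dfun p y (Ft y) <> 0 /\ deriv_within Ft 0 yb y (Gfun p y (Ft y)).
Hypothesis F_increasing : forall y1 y2, 0 <= y1 -> y1 < y2 -> y2 <= yb -> Ffun p Ft y1 < Ffun p Ft y2.

Ltac Rq := Req; cbv beta.

Lemma is_derive_ps (k : nat) (x : R) : is_derive (ps k) x (ps (S k) x).
Proof. apply is_derive_dpsi; auto. Qed.
Lemma continuous_ps (k : nat) (x : R) : continuous (ps k) x.
Proof. apply continuous_dpsi; auto. Qed.

(* [Gamma_fn] is never evaluated; it is nonzero because otherwise [psi] would be identically [0]
   (division by [0] returns [0]), making [D] vanish. *)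
Lemma psi_Gamma_neq0 : psi_Gamma p <> 0.
Proof.
  intros HG. destruct (Ft_ode 0 ltac:(lra)) as [HD _]. apply HD.
  unfold Dfun. change (psi p (Ft 0)) with (ps 0 (Ft 0)).
  rewrite dpsi_moment, HG by auto. unfold Rdiv. rewrite Rinv_0. ring.
Qed.

Lemma Q0_pos (z : R) : 0 < Qk p 0 z.
Proof. apply Qk0_pos; auto. apply psi_Gamma_neq0. Qed.

Definition Q0' (z : R) : R := ps 0 z * ps 3 z - ps 1 z * ps 2 z.

Lemma is_derive_Q0 (z : R) : is_derive (Qk p 0) z (Q0' z).
Proof.
  unfold Qk, Q0'. simpl.
  eapply is_derive_val. apply is_derive_Rminus. apply is_derive_Rmult; apply is_derive_ps.
  apply (is_derive_Rext (fun t => ps 1 t * ps 1 t)). intros; simpl; ring.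
  apply is_derive_Rmult; apply is_derive_ps. simpl. ring.
Qed.

Definition Dfun' (y u : R) : R := ps 0 u * ((rh + ka) * (cc - Rtilde p u y) * Qk p 1 u + Q0' u).
Definition Gfun' (y u : R) : R := be * Nfun p y u / Dfun' y u.

Lemma Dfun_eq (y u : R) : Dfun p y u = Dfun' y u.
Proof. unfold Dfun, Dfun'. rewrite (is_derive_unique _ _ _ (is_derive_Q0 u)). reflexivity. Qed.

Lemma Gfun_eq (y u : R) : Gfun p y u = Gfun' y u.
Proof. unfold Gfun, Gfun'. rewrite Dfun_eq. reflexivity. Qed.

Lemma continuous2_Rtilde (x y : R) : continuous2 (fun u y => Rtilde p u y) x y.
Proof.
  unfold Rtilde. apply continuous2_mult; [| apply continuous2_const].
  apply continuous2_minus. apply continuous2_plus. apply continuous2_const.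
  apply continuous2_mult. apply continuous2_const. apply continuous2_fst.
  apply continuous2_mult. apply continuous2_const. apply continuous2_snd.
Qed.

Lemma continuous2_c_Rtilde (y u : R) : continuous2 (fun y u => cc - Rtilde p u y) y u.
Proof.
  apply continuous2_minus. apply continuous2_const.
  apply (continuous2_comp2 (fun u y => Rtilde p u y) (fun y u => u) (fun y u => y)).
  apply continuous2_snd. apply continuous2_fst. apply continuous2_Rtilde.
Qed.

Lemma continuous2_ps (k : nat) (y u : R) : continuous2 (fun y u => ps k u) y u.
Proof. apply (continuous2_of_snd (ps k)). apply continuous_ps. Qed.

Lemma continuous_Qk (k : nat) (u : R) : continuous (Qk p k) u.
Proof.
  unfold Qk. apply continuous_Rminus. apply continuous_Rmult; apply continuous_ps.
  apply continuous_Rpow, continuous_ps.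
Qed.

Lemma continuous2_Dfun' (y u : R) : continuous2 Dfun' y u.
Proof.
  unfold Dfun'. apply continuous2_mult. apply continuous2_ps. apply continuous2_plus.
  - apply continuous2_mult. apply continuous2_mult. apply continuous2_const.
    apply continuous2_c_Rtilde.
    apply (continuous2_of_snd (Qk p 1)). apply continuous_Qk.
  - apply (continuous2_of_snd Q0'). unfold Q0'.
    apply continuous_Rminus; apply continuous_Rmult; apply continuous_ps.
Qed.

Lemma continuous2_Nfun (y u : R) : continuous2 (Nfun p) y u.
Proof.
  unfold Nfun. apply continuous2_mult. apply (continuous2_of_snd (Qk p 0)). apply continuous_Qk.
  apply continuous2_plus; [apply continuous2_plus |].
  - apply continuous2_mult. apply continuous2_const. apply continuous2_ps.
  - apply continuous2_mult. apply continuous2_mult. apply continuous2_const.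
    apply continuous2_c_Rtilde.
    apply continuous2_ps.
  - apply continuous2_ps.
Qed.

Lemma continuous2_Gfun' (y u : R) : Dfun' y u <> 0 -> continuous2 Gfun' y u.
Proof.
  intros HD. unfold Gfun', Rdiv. apply continuous2_mult.
  - apply continuous2_mult. apply continuous2_const. apply continuous2_Nfun.
  - apply (continuous2_comp Rinv Dfun'). apply continuous2_Dfun'. apply continuous_Rinv. auto.
Qed.

Definition Ft' (y : R) : R := Gfun p y (Ft y).

Definition Fext : R -> R := linext Ft Ft' 0 yb.

Definition slope (y : R) : R := Ft' (clamp 0 yb y).

Lemma Fext_in (y : R) : 0 <= y <= yb -> Fext y = Ft y.
Proof. apply linext_in. Qed.

Lemma is_derive_Fext (y : R) : is_derive Fext y (slope y).
Proof. apply is_derive_linext. auto. intros z Hz. exact (proj2 (Ft_ode z Hz)). Qed.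

Lemma continuous_Fext (y : R) : continuous Fext y.
Proof. eapply is_derive_Rcontinuous. apply is_derive_Fext. Qed.

Lemma slope_in (y : R) : 0 <= y <= yb -> slope y = Gfun' y (Fext y).
Proof. intros Hy. unfold slope, Ft'. rewrite clamp_id, Fext_in, Gfun_eq by lra. reflexivity. Qed.

Lemma continuous_slope (y : R) : continuous slope y.
Proof.
  assert (Hcl := clamp_range 0 yb ltac:(lra) y).
  apply (continuous_Rext (fun t => Gfun' (clamp 0 yb t) (Ft (clamp 0 yb t)))).
  { intros t. unfold slope, Ft'. rewrite Gfun_eq. reflexivity. }
  apply (continuous_comp_continuous2 Gfun' (clamp 0 yb) (fun t => Ft (clamp 0 yb t))).
  - apply continuous_clamp. lra.
  - apply continuous_clamp_comp. lra. intros y0 Hy0.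
    apply (deriv_within_continuous _ _ _ _ _ (proj2 (Ft_ode y0 Hy0))).
  - apply continuous2_Gfun'. rewrite <- Dfun_eq. apply Ft_ode; auto.
Qed.

Lemma is_derive_ps_Fext (k : nat) (z : R) : is_derive (fun t => ps k (Fext t)) z (ps (S k) (Fext z) * slope z).
Proof. apply (is_derive_Rcomp (ps k) Fext). apply is_derive_ps. apply is_derive_Fext. Qed.
Lemma continuous_ps_Fext (k : nat) (z : R) : continuous (fun t => ps k (Fext t)) z.
Proof. eapply is_derive_Rcontinuous. apply is_derive_ps_Fext. Qed.

Definition Anum (z : R) : R := ps 1 (Fext z) * (cc - Rtilde p (Fext z) z) + / (rh + ka) * ps 0 (Fext z).
Definition Aden (z : R) : R := - be * Qk p 0 (Fext z).
Definition dRtilde_ext (z : R) : R := (rh * slope z - be * (rh + 2 * ka)) / (rh * (rh + ka)).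
Definition dAnum (z : R) : R :=
  ps 2 (Fext z) * slope z * (cc - Rtilde p (Fext z) z) + ps 1 (Fext z) * (- dRtilde_ext z)
  + / (rh + ka) * (ps 1 (Fext z) * slope z).
Definition dAden (z : R) : R := - be * (Q0' (Fext z) * slope z).
Definition Aext (z : R) : R := Afun p Fext z.
Definition dAext (z : R) : R := (dAnum z * Aden z - Anum z * dAden z) / (Aden z) ^ 2.

Lemma Aden_neq0 (z : R) : Aden z <> 0.
Proof.
  unfold Aden. generalize (Q0_pos (Fext z)). intros.
  apply Rmult_integral_contrapositive_currified; lra.
Qed.

Lemma is_derive_Rtilde_ext (z : R) : is_derive (fun t => Rtilde p (Fext t) t) z (dRtilde_ext z).
Proof.
  unfold Rtilde, dRtilde_ext.
  apply (is_derive_Rext (fun t => / (rh * (rh + ka)) * ((mu * ka) + rh * Fext t - be * (rh + 2 * ka) * t))).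
  intros; Req; unfold Rdiv; ring.
  eapply is_derive_val. apply is_derive_Rscal. apply is_derive_Rminus. apply is_derive_Rplus.
  apply is_derive_Rconst. apply is_derive_Rscal. apply is_derive_Fext.
  apply is_derive_Rscal. apply is_derive_Rid. Req. field. split; lra.
Qed.

Lemma is_derive_Anum (z : R) : is_derive Anum z (dAnum z).
Proof.
  unfold Anum, dAnum. eapply is_derive_val. apply is_derive_Rplus. apply is_derive_Rmult.
  apply is_derive_ps_Fext.
  apply is_derive_Rminus. apply is_derive_Rconst. apply is_derive_Rtilde_ext. apply is_derive_Rscal.
  apply is_derive_ps_Fext.
  Rq. ring.
Qed.

Lemma is_derive_Aden (z : R) : is_derive Aden z (dAden z).
Proof.
  unfold Aden, dAden. apply is_derive_Rscal. apply (is_derive_Rcomp (Qk p 0) Fext).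
  apply is_derive_Q0. apply is_derive_Fext.
Qed.

Lemma is_derive_Aext (z : R) : is_derive Aext z (dAext z).
Proof.
  apply (is_derive_Rext (fun t => Anum t / Aden t)). intros; reflexivity.
  unfold dAext. apply is_derive_div. apply is_derive_Anum. apply is_derive_Aden. apply Aden_neq0.
Qed.

Lemma continuous_Aext (z : R) : continuous Aext z.
Proof. eapply is_derive_Rcontinuous. apply is_derive_Aext. Qed.

Lemma continuous_Rtilde_ext (z : R) : continuous (fun t => Rtilde p (Fext t) t) z.
Proof. eapply is_derive_Rcontinuous. apply is_derive_Rtilde_ext. Qed.

Lemma continuous_dAnum (z : R) : continuous dAnum z.
Proof.
  assert (Hc := continuous_Rconst). assert (Hs := continuous_slope).
  assert (Hp := continuous_ps_Fext).
  unfold dAnum, dRtilde_ext, Rdiv. apply continuous_Rplus; [apply continuous_Rplus |].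
  - apply continuous_Rmult. apply continuous_Rmult; auto.
    apply continuous_Rminus; auto. apply continuous_Rtilde_ext.
  - apply continuous_Rmult; auto. apply continuous_Ropp. apply continuous_Rmult; auto.
    apply continuous_Rminus; auto. apply continuous_Rmult; auto.
  - apply continuous_Rmult; auto. apply continuous_Rmult; auto.
Qed.

Lemma continuous_dAden (z : R) : continuous dAden z.
Proof.
  unfold dAden. apply continuous_Rmult. apply continuous_Rconst.
  apply continuous_Rmult; [| apply continuous_slope].
  unfold Q0'. apply continuous_Rminus; apply continuous_Rmult; apply continuous_ps_Fext.
Qed.

Lemma continuous_dAext (z : R) : continuous dAext z.
Proof.
  assert (HA := is_derive_Rcontinuous _ _ _ (is_derive_Anum z)).
  assert (HD := is_derive_Rcontinuous _ _ _ (is_derive_Aden z)).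
  unfold dAext, Rdiv. apply continuous_Rmult.
  - apply continuous_Rminus; apply continuous_Rmult; auto using continuous_dAnum, continuous_dAden.
  - apply continuous_Rinv_comp. apply continuous_Rpow; auto. apply pow_nonzero, Aden_neq0.
Qed.

Definition Rfun_z (x z : R) : R :=
  x / (rh + ka) + mu * ka / (rh * (rh + ka)) - 2 * ka * be * z / (rh * (rh + ka)).
Definition Phi (x z : R) : R := Aext z * ps 0 (x + be * z) + Rfun p x z - cc * z.
Definition Phix (x z : R) : R := Aext z * ps 1 (x + be * z) + z / (rh + ka).
Definition Phixx (x z : R) : R := Aext z * ps 2 (x + be * z).
Definition Phiz (x z : R) : R := dAext z * ps 0 (x + be * z) + Aext z * be * ps 1 (x + be * z) + Rfun_z x z - cc.
Definition Phixz (x z : R) : R := dAext z * ps 1 (x + be * z) + Aext z * be * ps 2 (x + be * z) + / (rh + ka).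
Definition Phixxz (x z : R) : R := dAext z * ps 2 (x + be * z) + Aext z * be * ps 3 (x + be * z).

Lemma is_derive_ps_x (k : nat) (x z : R) : is_derive (fun s => ps k (s + be * z)) x (ps (S k) (x + be * z)).
Proof.
  eapply is_derive_val. apply (is_derive_Rcomp (ps k) (fun s => s + be * z)). apply is_derive_ps.
  apply (is_derive_Rext (fun s => 1 * s + be * z)). intros; Rq; ring. apply is_derive_affine.
  Rq; ring.
Qed.
Lemma is_derive_ps_z (k : nat) (x z : R) : is_derive (fun s => ps k (x + be * s)) z (ps (S k) (x + be * z) * be).
Proof.
  apply (is_derive_Rcomp (ps k) (fun s => x + be * s)). apply is_derive_ps.
  apply (is_derive_Rext (fun s => be * s + x)). intros; Rq; ring. apply is_derive_affine.
Qed.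

Lemma is_derive_Phi_x (x z : R) : is_derive (fun s => Phi s z) x (Phix x z).
Proof.
  unfold Phi, Phix, Rfun. eapply is_derive_val. apply is_derive_Rminus. apply is_derive_Rplus.
  apply is_derive_Rscal. apply is_derive_ps_x.
  apply (is_derive_Rext (fun s => (z / (rh + ka)) * s
    + (mu * ka * z / (rh * (rh + ka)) - ka * be * z ^ 2 / (rh * (rh + ka))))).
  intros; Rq; field; lra. apply is_derive_affine. apply is_derive_Rconst. Rq; ring.
Qed.
Lemma is_derive_Phix_x (x z : R) : is_derive (fun s => Phix s z) x (Phixx x z).
Proof.
  unfold Phix, Phixx. eapply is_derive_val. apply is_derive_Rplus. apply is_derive_Rscal.
  apply is_derive_ps_x. apply is_derive_Rconst. Rq; ring.
Qed.
Lemma is_derive_Phiz_x (x z : R) : is_derive (fun s => Phiz s z) x (Phixz x z).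
Proof.
  unfold Phiz, Phixz, Rfun_z. eapply is_derive_val. apply is_derive_Rminus. apply is_derive_Rplus.
  apply is_derive_Rplus.
  apply is_derive_Rscal. apply is_derive_ps_x. apply is_derive_Rscal. apply is_derive_ps_x.
  apply (is_derive_Rext (fun s => (/ (rh + ka)) * s
    + (mu * ka / (rh * (rh + ka)) - 2 * ka * be * z / (rh * (rh + ka))))).
  intros; Rq; field; lra. apply is_derive_affine. apply is_derive_Rconst. Rq; ring.
Qed.
Lemma is_derive_Phixz_x (x z : R) : is_derive (fun s => Phixz s z) x (Phixxz x z).
Proof.
  unfold Phixz, Phixxz. eapply is_derive_val. apply is_derive_Rplus. apply is_derive_Rplus.
  apply is_derive_Rscal. apply is_derive_ps_x. apply is_derive_Rscal. apply is_derive_ps_x.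
  apply is_derive_Rconst. Rq; ring.
Qed.
Lemma is_derive_Phi_z (x z : R) : is_derive (fun s => Phi x s) z (Phiz x z).
Proof.
  unfold Phi, Phiz, Rfun, Rfun_z. eapply is_derive_val. apply is_derive_Rminus.
  apply is_derive_Rplus.
  apply is_derive_Rmult. apply is_derive_Aext. apply is_derive_ps_z.
  apply (is_derive_Rext (fun s => / (rh * (rh + ka)) * ((rh * x + mu * ka) * s - ka * be * s ^ 2))).
  intros; Rq; field; lra.
  apply is_derive_Rscal. apply is_derive_Rminus. apply is_derive_Rscal. apply is_derive_Rid.
  apply is_derive_Rscal. apply (is_derive_Rext (fun s => s * s)). intros; Rq; ring.
  apply is_derive_Rmult; apply is_derive_Rid.
  apply is_derive_Rscal. apply is_derive_Rid. Rq. field. lra.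
Qed.
Lemma is_derive_Phix_z (x z : R) : is_derive (fun s => Phix x s) z (Phixz x z).
Proof.
  unfold Phix, Phixz. eapply is_derive_val. apply is_derive_Rplus. apply is_derive_Rmult.
  apply is_derive_Aext. apply is_derive_ps_z.
  apply (is_derive_Rext (fun s => / (rh + ka) * s + 0)). intros; Rq; field; lra.
  apply is_derive_affine.
  Rq. ring.
Qed.

Lemma continuous2_ps_shift (k : nat) (x z : R) : continuous2 (fun x z => ps k (x + be * z)) x z.
Proof.
  apply (continuous2_comp (ps k) (fun x z => x + be * z)). apply continuous2_plus.
  apply continuous2_fst.
  apply continuous2_mult. apply continuous2_const. apply continuous2_snd. apply continuous_ps.
Qed.
Lemma continuous2_Aext (x z : R) : continuous2 (fun x z => Aext z) x z.
Proof. apply (continuous2_of_snd Aext). apply continuous_Aext. Qed.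
Lemma continuous2_dAext (x z : R) : continuous2 (fun x z => dAext z) x z.
Proof. apply (continuous2_of_snd dAext). apply continuous_dAext. Qed.

Lemma continuous2_Rfun (x z : R) : continuous2 (fun x z => Rfun p x z) x z.
Proof.
  unfold Rfun, Rdiv. apply continuous2_minus. apply continuous2_plus.
  - apply continuous2_mult. apply continuous2_mult. apply continuous2_fst. apply continuous2_snd.
    apply continuous2_const.
  - apply continuous2_mult. apply continuous2_mult. apply continuous2_const. apply continuous2_snd.
    apply continuous2_const.
  - apply continuous2_mult. apply continuous2_mult. apply continuous2_const. apply continuous2_pow2.
    apply continuous2_snd. apply continuous2_const.
Qed.
Lemma continuous2_Rfun_z (x z : R) : continuous2 Rfun_z x z.
Proof.
  unfold Rfun_z, Rdiv. apply continuous2_minus. apply continuous2_plus.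
  - apply continuous2_mult. apply continuous2_fst. apply continuous2_const.
  - apply continuous2_const.
  - apply continuous2_mult. apply continuous2_mult. apply continuous2_const. apply continuous2_snd.
    apply continuous2_const.
Qed.

Lemma continuous2_Phi (x z : R) : continuous2 Phi x z.
Proof.
  unfold Phi. apply continuous2_minus. apply continuous2_plus. apply continuous2_mult.
  apply continuous2_Aext. apply continuous2_ps_shift.
  apply continuous2_Rfun. apply continuous2_mult. apply continuous2_const. apply continuous2_snd.
Qed.
Lemma continuous2_Phix (x z : R) : continuous2 Phix x z.
Proof.
  unfold Phix, Rdiv. apply continuous2_plus. apply continuous2_mult. apply continuous2_Aext.
  apply continuous2_ps_shift.
  apply continuous2_mult. apply continuous2_snd. apply continuous2_const.
Qed.
Lemma continuous2_Phixx (x z : R) : continuous2 Phixx x z.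
Proof. unfold Phixx. apply continuous2_mult. apply continuous2_Aext. apply continuous2_ps_shift.
Qed.
Lemma continuous2_Phiz (x z : R) : continuous2 Phiz x z.
Proof.
  unfold Phiz. apply continuous2_minus. apply continuous2_plus. apply continuous2_plus.
  apply continuous2_mult. apply continuous2_dAext. apply continuous2_ps_shift.
  apply continuous2_mult. apply continuous2_mult. apply continuous2_Aext. apply continuous2_const.
  apply continuous2_ps_shift.
  apply continuous2_Rfun_z. apply continuous2_const.
Qed.

Definition bdry (y : R) : R := Fext y - be * y.

Lemma smooth_fit (z : R) : 0 <= z <= yb -> Phiz (bdry z) z = 0 /\ Phixz (bdry z) z = 0.
Proof.
  intros Hz. unfold bdry.
  assert (Hu : Fext z - be * z + be * z = Fext z) by ring.
  assert (HR : Rfun_z (Fext z - be * z) z = Rtilde p (Fext z) z) by (unfold Rfun_z, Rtilde; field; lra).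
  unfold Phiz, Phixz. rewrite Hu, HR.
  unfold dAext. change (Aext z) with (Anum z / Aden z). unfold Anum, Aden, dAnum, dAden, dRtilde_ext, Q0'.
  assert (HG := slope_in z Hz).
  assert (HD : Dfun' z (Fext z) <> 0) by (rewrite Fext_in, <- Dfun_eq by auto; apply Ft_ode; auto).
  assert (HQ := Q0_pos (Fext z)).
  unfold Gfun', Nfun, Dfun', Q0' in HG, HD. unfold Qk in HG, HD, HQ.
  change (0 + 2)%nat with 2%nat in *. change (0 + 1)%nat with 1%nat in *.
  change (1 + 2)%nat with 3%nat in *. change (1 + 1)%nat with 2%nat in *.
  assert (Hp0 : ps 0 (Fext z) <> 0) by (intros E; apply HD; rewrite E; ring).
  assert (HB : (rh + ka) * (cc - Rtilde p (Fext z) z) * (ps 1 (Fext z) * ps 3 (Fext z) - ps 2 (Fext z) ^ 2)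
               + (ps 0 (Fext z) * ps 3 (Fext z) - ps 1 (Fext z) * ps 2 (Fext z)) <> 0)
    by (intros E; apply HD; rewrite E; ring).
  apply (smooth_fit_algebra rh ka be cc (Rtilde p (Fext z) z) (ps 0 (Fext z)) (ps 1 (Fext z))
           (ps 2 (Fext z)) (ps 3 (Fext z)) (slope z)); try lra; auto.
Qed.

Lemma continuous_bdry (y : R) : continuous bdry y.
Proof.
  unfold bdry. apply continuous_Rminus. apply continuous_Fext.
  apply continuous_Rmult. apply continuous_Rconst. apply continuous_Rid.
Qed.
Lemma bdry_Ffun (y : R) : 0 <= y <= yb -> bdry y = Ffun p Ft y.
Proof. intros. unfold bdry, Ffun. rewrite Fext_in by auto. auto. Qed.
Lemma bdry_lt (a b : R) : 0 <= a -> a < b -> b <= yb -> bdry a < bdry b.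
Proof. intros. rewrite !bdry_Ffun by lra. apply F_increasing; auto. Qed.
Lemma bdry_le (a b : R) : 0 <= a -> a <= b -> b <= yb -> bdry a <= bdry b.
Proof. intros. destruct (Req_dec a b) as [->|]. lra. apply Rlt_le, bdry_lt; lra. Qed.
Lemma bdry_le_inv (a b : R) : 0 <= a <= yb -> 0 <= b <= yb -> bdry a <= bdry b -> a <= b.
Proof.
  intros Ha Hb H. destruct (Rle_lt_dec a b); auto.
  generalize (bdry_lt b a ltac:(lra) r ltac:(lra)). lra.
Qed.

Lemma xbar_bdry : xbar p Ft = bdry yb.
Proof. unfold xbar. rewrite bdry_Ffun by lra. auto. Qed.

Lemma Finv_spec (x : R) : bdry 0 <= x <= bdry yb -> 0 <= Finv p Ft x <= yb /\ bdry (Finv p Ft x) = x.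
Proof.
  intros Hx.
  assert (Hex : exists y, 0 <= y <= yb /\ Ffun p Ft y = x).
  { destruct (IVT_gen_consistent bdry 0 yb x continuous_bdry) as [y [Hy Hfy]].
    - rewrite Rmin_left, Rmax_right; auto; apply bdry_le; lra.
    - rewrite Rmin_left, Rmax_right in Hy by lra. exists y. split; auto. rewrite <- bdry_Ffun; auto.
      }
  destruct (epsilon_spec (inhabits 0) (fun y => 0 <= y <= yb /\ Ffun p Ft y = x) Hex) as [H1 H2].
  split; auto. rewrite bdry_Ffun; auto.
Qed.

Definition binv (x : R) : R :=
  if Rlt_dec x (bdry 0) then 0 else if Rlt_dec x (bdry yb) then Finv p Ft x else yb.

Lemma binv_range (x : R) : 0 <= binv x <= yb.
Proof. unfold binv. destruct Rlt_dec. lra. destruct Rlt_dec. apply Finv_spec. lra. lra. Qed.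
Lemma binv_lo (x : R) : x < bdry 0 -> binv x = 0.
Proof. intros. unfold binv. destruct Rlt_dec; [auto | lra]. Qed.
Lemma binv_hi (x : R) : bdry yb <= x -> binv x = yb.
Proof.
  intros. unfold binv. assert (bdry 0 < bdry yb) by (apply bdry_lt; lra).
  destruct Rlt_dec. lra. destruct Rlt_dec. lra. auto.
Qed.
Lemma bdry_binv (x : R) : bdry 0 <= x <= bdry yb -> bdry (binv x) = x.
Proof. intros Hx. unfold binv. destruct Rlt_dec. lra. destruct Rlt_dec. apply Finv_spec; lra. lra.
Qed.
Lemma binv_bdry (y : R) : 0 <= y <= yb -> binv (bdry y) = y.
Proof.
  intros Hy. assert (H := bdry_binv (bdry y) ltac:(split; apply bdry_le; lra)).
  assert (H2 := binv_range (bdry y)).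
  apply Rle_antisym; apply bdry_le_inv; lra.
Qed.
Lemma bdry_binv_le (x : R) : bdry 0 <= x -> bdry (binv x) <= x.
Proof. intros Hx. destruct (Rle_lt_dec x (bdry yb)). rewrite bdry_binv; lra. rewrite binv_hi; lra.
Qed.
Lemma bdry_binv_ge (x : R) : x <= bdry yb -> x <= bdry (binv x).
Proof. intros Hx. destruct (Rle_lt_dec (bdry 0) x). rewrite bdry_binv; lra. rewrite binv_lo; lra.
Qed.
Lemma binv_le (x x' : R) : x <= x' -> binv x <= binv x'.
Proof.
  intros Hxx.
  destruct (Rlt_le_dec x (bdry 0)). rewrite (binv_lo x) by auto. generalize (binv_range x'); lra.
  destruct (Rle_lt_dec (bdry yb) x'). rewrite (binv_hi x') by auto. generalize (binv_range x); lra.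
  apply bdry_le_inv; try apply binv_range. rewrite !bdry_binv by (split; lra). lra.
Qed.
Lemma binv_ge (x t : R) : 0 <= t <= yb -> bdry t <= x -> t <= binv x.
Proof.
  intros Ht Hx. destruct (Rle_lt_dec (bdry yb) x). rewrite binv_hi by auto. lra.
  apply bdry_le_inv; auto. apply binv_range. rewrite bdry_binv; auto.
  split; [| lra]. apply Rle_trans with (bdry t); auto. apply bdry_le; lra.
Qed.

Lemma continuous_binv (x : R) : continuous binv x.
Proof.
  apply (continuous_monotone_onto binv 0 yb). apply binv_le. apply binv_range.
  intros z Hz. exists (bdry z). apply binv_bdry; auto.
Qed.

Definition ystar (x y : R) : R := Rmax y (binv x).

Lemma ystar_range (x y : R) : 0 <= y <= yb -> 0 <= ystar x y <= yb.
Proof. intros. unfold ystar. generalize (binv_range x). unfold Rmax; destruct Rle_dec; lra. Qed.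

Lemma continuous2_ystar (x y : R) : continuous2 ystar x y.
Proof.
  unfold ystar. apply (continuous2_comp2 Rmax (fun x y => y) (fun x y => binv x)).
  apply continuous2_snd.
  apply (continuous2_of_fst binv). apply continuous_binv. apply continuous2_Rmax.
Qed.

Lemma continuous_ystar_x (x y : R) : continuous (fun s => ystar s y) x.
Proof.
  apply (continuous_comp_continuous2 ystar (fun s => s) (fun s => y)).
  apply continuous_Rid. apply continuous_Rconst. apply continuous2_ystar.
Qed.

Lemma ystar_waiting (x t : R) : 0 <= t <= yb -> x < bdry t -> ystar x t = t.
Proof.
  intros Ht Hx. unfold ystar. apply Rmax_left.
  destruct (Rlt_le_dec x (bdry 0)). rewrite binv_lo by auto. lra.
  apply bdry_le_inv. apply binv_range. auto. rewrite bdry_binv. lra.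
  split; auto. apply Rlt_le, Rlt_le_trans with (bdry t); auto. apply bdry_le; lra.
Qed.

Lemma bdry_between_ystar_le (x x' y z : R) : 0 <= y <= yb -> x <= x' -> ystar x y < ystar x' y ->
  ystar x y <= z <= ystar x' y -> x <= bdry z <= x'.
Proof.
  intros Hy Hxx Hlt Hz. unfold ystar in *.
  assert (Hb := binv_range x). assert (Hb' := binv_range x').
  assert (Hy' : y < binv x' /\ Rmax y (binv x') = binv x').
  { unfold Rmax in *. destruct (Rle_dec y (binv x')); destruct (Rle_dec y (binv x)); lra. }
  assert (Hx'0 : bdry 0 <= x').
  { destruct (Rlt_le_dec x' (bdry 0)) as [H|]; auto. rewrite binv_lo in Hy' by auto. lra. }
  assert (Hxb : x <= bdry yb).
  { destruct (Rle_lt_dec x (bdry yb)) as [|H]; auto. rewrite (binv_hi x) in Hlt by lra.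
    generalize (Rmax_r y yb). lra. }
  generalize (Rmax_r y (binv x)) (ystar_range x y Hy). unfold ystar. intros. split.
  - apply Rle_trans with (bdry (binv x)). apply bdry_binv_ge; auto. apply bdry_le; lra.
  - apply Rle_trans with (bdry (binv x')). apply bdry_le; lra. apply bdry_binv_le; auto.
Qed.

Lemma bdry_between_ystar (x x' y z : R) : 0 <= y <= yb -> ystar x y <> ystar x' y ->
  Rmin (ystar x y) (ystar x' y) <= z <= Rmax (ystar x y) (ystar x' y) ->
  0 <= z <= yb /\ Rmin x x' <= bdry z <= Rmax x x'.
Proof.
  intros Hy Hne Hz.
  assert (R1 := ystar_range x y Hy). assert (R2 := ystar_range x' y Hy).
  assert (Hmono : forall u v, u <= v -> ystar u y <= ystar v y).
  { intros u v Huv. unfold ystar. generalize (binv_le u v Huv). unfold Rmax.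
    repeat destruct Rle_dec; lra. }
  split. { unfold Rmin, Rmax in *; repeat destruct Rle_dec; lra. }
  destruct (Rle_lt_dec x x') as [Hxx|Hxx].
  - assert (Hlt : ystar x y < ystar x' y) by (generalize (Hmono x x' Hxx); lra).
    rewrite Rmin_left, Rmax_right in Hz by lra. rewrite Rmin_left, Rmax_right by lra.
    apply (bdry_between_ystar_le x x' y z); auto.
  - assert (Hlt : ystar x' y < ystar x y) by (generalize (Hmono x' x ltac:(lra)); lra).
    rewrite Rmin_right, Rmax_left in Hz by lra. rewrite Rmin_right, Rmax_left by lra.
    apply (bdry_between_ystar_le x' x y z); auto; lra.
Qed.

Lemma bounded_shifted_product (u : R -> R) (k : nat) (X1 X2 : R) : X1 <= X2 ->
  (forall z, continuous u z) -> exists B, 0 <= B /\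
  forall s z, X1 <= s <= X2 -> 0 <= z <= yb -> Rabs (u z * ps k (s + be * z)) <= B.
Proof.
  intros HX Hu.
  destruct (bounded_on_segment u 0 yb ltac:(lra) (fun z _ => Hu z)) as [Bu [HBu Hbu]].
  destruct (bounded_on_segment (ps k) X1 (X2 + be * yb) ltac:(nra) (fun t _ => continuous_ps k t))
    as [Bk [HBk Hbk]].
  exists (Bu * Bk). split. nra. intros s z Hs Hz. rewrite Rabs_mult.
  apply Rmult_le_compat; try apply Rabs_pos; auto. apply Hbk. split; nra.
Qed.

Lemma Phi_mixed_bounds (X1 X2 : R) : X1 <= X2 -> exists L, 0 <= L /\
  forall s z, X1 <= s <= X2 -> 0 <= z <= yb -> Rabs (Phixz s z) <= L /\ Rabs (Phixxz s z) <= L.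
Proof.
  intros HX.
  assert (HAb : forall z, continuous (fun z => Aext z * be) z)
    by (intros; apply continuous_Rmult; [apply continuous_Aext | apply continuous_Rconst]).
  destruct (bounded_shifted_product dAext 1 X1 X2 HX continuous_dAext) as [B1 [HB1 H1]].
  destruct (bounded_shifted_product _ 2 X1 X2 HX HAb) as [B2 [HB2 H2]].
  destruct (bounded_shifted_product dAext 2 X1 X2 HX continuous_dAext) as [B3 [HB3 H3]].
  destruct (bounded_shifted_product _ 3 X1 X2 HX HAb) as [B4 [HB4 H4]].
  assert (Hk : 0 < / (rh + ka)) by (apply Rinv_0_lt_compat; lra).
  exists (B1 + B2 + / (rh + ka) + B3 + B4). split. lra.
  intros s z Hs Hz. specialize (H1 s z Hs Hz). specialize (H2 s z Hs Hz).
  specialize (H3 s z Hs Hz). specialize (H4 s z Hs Hz). unfold Phixz, Phixxz. split.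
  - eapply Rle_trans. apply Rabs_triang. rewrite (Rabs_pos_eq (/ (rh + ka))) by lra.
    eapply Rle_trans. apply Rplus_le_compat_r, Rabs_triang. lra.
  - eapply Rle_trans. apply Rabs_triang. lra.
Qed.

Lemma Lipschitz_vanishing_on_bdry (Q Qx : R -> R -> R) (x y L : R) : 0 <= y <= yb ->
  (forall s z, is_derive (fun s => Q s z) s (Qx s z)) ->
  (forall z, 0 <= z <= yb -> Q (bdry z) z = 0) ->
  (forall s z, x - 1 <= s <= x + 1 -> 0 <= z <= yb -> Rabs (Qx s z) <= L) ->
  forall x' z, Rabs (x' - x) <= 1 -> ystar x y <> ystar x' y ->
    Rmin (ystar x y) (ystar x' y) <= z <= Rmax (ystar x y) (ystar x' y) ->
    Rabs (Q x' z) <= L * Rabs (x' - x).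
Proof.
  intros Hy Hd H0 HL x' z Hx' Hne Hz.
  destruct (bdry_between_ystar x x' y z Hy Hne Hz) as [Hzr Hbz].
  apply Rabs_le_between' in Hx'.
  replace (Q x' z) with (Q x' z - Q (bdry z) z) by (rewrite H0; auto; ring).
  eapply Rle_trans.
  - apply (MVT_abs_le (fun s => Q s z) (fun s => Qx s z)). intros; apply Hd.
    intros c Hc. apply HL; auto. unfold Rmin, Rmax in *; repeat destruct Rle_dec; lra.
  - apply Rmult_le_compat_l.
    + eapply Rle_trans. apply Rabs_pos. apply (HL x z); auto. lra.
    + rewrite <- Rabs_Ropp, Ropp_minus_distr, <- (Rabs_Ropp (x' - x)), Ropp_minus_distr.
      apply Rabs_le_between_min_max. auto.
Qed.

Lemma Phi_x_envelope_bounds (x y : R) : 0 <= y <= yb -> exists L, 0 <= L /\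
  (forall x' z, Rabs (x' - x) <= 1 -> ystar x y <> ystar x' y ->
     Rmin (ystar x y) (ystar x' y) <= z <= Rmax (ystar x y) (ystar x' y) ->
     Rabs (Phiz x' z) <= L * Rabs (x' - x) /\ Rabs (Phixz x' z) <= L * Rabs (x' - x)).
Proof.
  intros Hy. destruct (Phi_mixed_bounds (x - 1) (x + 1) ltac:(lra)) as [L [HL HLb]].
  exists L. split; auto. intros x' z Hx' Hne Hz. split.
  - apply (Lipschitz_vanishing_on_bdry Phiz Phixz x y L Hy); auto. apply is_derive_Phiz_x.
    intros; apply smooth_fit; auto. intros; apply HLb; auto.
  - apply (Lipschitz_vanishing_on_bdry Phixz Phixxz x y L Hy); auto. apply is_derive_Phixz_x.
    intros; apply smooth_fit; auto. intros; apply HLb; auto.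
Qed.

Lemma is_derive_Phi_ystar (x y : R) : 0 <= y <= yb ->
  is_derive (fun s => Phi s (ystar s y)) x (Phix x (ystar x y)).
Proof.
  intros Hy. destruct (Phi_x_envelope_bounds x y Hy) as [L [HL HLb]].
  apply (is_derive_envelope Phi Phix Phiz (fun s => ystar s y) x L HL).
  apply is_derive_Phi_x. intros; apply is_derive_Phi_z.
  intros; apply HLb; auto. apply continuous_ystar_x.
Qed.

Lemma is_derive_Phix_ystar (x y : R) : 0 <= y <= yb ->
  is_derive (fun s => Phix s (ystar s y)) x (Phixx x (ystar x y)).
Proof.
  intros Hy. destruct (Phi_x_envelope_bounds x y Hy) as [L [HL HLb]].
  apply (is_derive_envelope Phix Phixx Phixz (fun s => ystar s y) x L HL).
  apply is_derive_Phix_x. intros; apply is_derive_Phix_z.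
  intros; apply HLb; auto. apply continuous_ystar_x.
Qed.

Lemma Afun_Aext (z : R) : 0 <= z <= yb -> Afun p Ft z = Aext z.
Proof. intros Hz. unfold Aext, Afun. rewrite Fext_in by auto. reflexivity. Qed.

Lemma Aext_ybar : Aext yb = 0.
Proof.
  rewrite <- Afun_Aext by lra. unfold Afun. unfold Hfun in Ft_ybar. rewrite Ft_ybar.
  unfold Rdiv. ring.
Qed.

Lemma wfun_Phi (x y : R) : 0 <= y <= yb -> wfun p Ft x y = Phi x (ystar x y) + cc * y.
Proof.
  intros Hy. unfold wfun. rewrite !xbar_bdry.
  assert (HF0 : bdry 0 <= bdry y) by (apply bdry_le; lra).
  assert (HFy : bdry y <= bdry yb) by (apply bdry_le; lra).
  change (psi p) with (ps 0).
  destruct (Rlt_dec y yb) as [Hy1|Hy1].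
  - rewrite <- (bdry_Ffun y) by auto.
    destruct (Rlt_dec x (bdry y)) as [H1|H1].
    + rewrite ystar_waiting by auto. unfold Phi. rewrite Afun_Aext by auto. ring.
    + unfold ystar. destruct (Rlt_dec x (bdry yb)) as [H2|H2].
      * assert (HG : binv x = Finv p Ft x).
        { unfold binv. destruct Rlt_dec; [lra |]. destruct Rlt_dec; [auto | lra]. }
        assert (Hz := binv_range x). assert (Hzy := binv_ge x y Hy ltac:(lra)).
        rewrite Rmax_right, <- HG by auto. unfold Phi. rewrite Afun_Aext by auto. ring.
      * rewrite binv_hi, Rmax_right by lra. unfold Phi. rewrite Aext_ybar. ring.
  - assert (y = yb) by lra. subst y.
    unfold ystar. rewrite Rmax_left by apply binv_range. unfold Phi.
    destruct (Rlt_dec x (bdry yb)).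
    + rewrite Afun_Aext by lra. ring.
    + rewrite Aext_ybar. ring.
Qed.

Definition wx (x y : R) : R := Phix x (ystar x y).
Definition wxx (x y : R) : R := Phixx x (ystar x y).
Definition wy (x y : R) : R := cc + (if Rlt_dec x (bdry y) then Phiz x y else 0).

Lemma is_derive_w_x (x y : R) : 0 <= y <= yb -> is_derive (fun s => wfun p Ft s y) x (wx x y).
Proof.
  intros Hy. apply (is_derive_Rext (fun s => Phi s (ystar s y) + cc * y)).
  { intros s. rewrite wfun_Phi by auto. reflexivity. }
  eapply is_derive_val. apply is_derive_Rplus. exact (is_derive_Phi_ystar x y Hy).
  apply is_derive_Rconst. unfold wx. Rq. ring.
Qed.

Lemma is_derive_wx_x (x y : R) : 0 <= y <= yb -> is_derive (fun s => wx s y) x (wxx x y).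
Proof. exact (is_derive_Phix_ystar x y). Qed.

Lemma deriv_within_w_y_waiting (x y : R) : 0 <= y <= yb -> x < bdry y ->
  deriv_within (fun t => wfun p Ft x t) 0 yb y (Phiz x y + cc).
Proof.
  intros Hy Hx. assert (Hc := continuous_bdry y). apply continuity_pt_filterlim in Hc.
  destruct (Hc (bdry y - x) ltac:(lra)) as [d [Hd Hbd]].
  apply (deriv_within_ext_local (fun t => Phi x t + cc * t) _ _ _ _ _ d Hd); auto.
  - intros t Ht Htd. rewrite wfun_Phi, ystar_waiting; auto.
    destruct (Req_dec t y) as [->|Hne]; auto.
    assert (Hb : Rabs (bdry t - bdry y) < bdry y - x) by (apply Hbd; split; [split; [exact I | auto] | auto]).
    apply Rabs_lt_between' in Hb. lra.
  - apply deriv_within_plus_linear, deriv_within_of_is_derive, is_derive_Phi_z.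
Qed.

Lemma deriv_within_w_y_stopped (x y : R) : 0 <= y <= yb -> bdry y <= x ->
  deriv_within (fun t => wfun p Ft x t) 0 yb y (0 + cc).
Proof.
  intros Hy Hx.
  apply (deriv_within_ext_local (fun t => Phi x (Rmax t (binv x)) + cc * t) _ _ _ _ _ 1); try lra.
  { intros t Ht _. rewrite wfun_Phi; auto. }
  apply deriv_within_plus_linear, (deriv_within_Rmax_flat _ _ _ _ _ (Phiz x y)).
  apply binv_ge; auto. apply is_derive_Phi_z.
  intros Heq Hyb.
  assert (Hxb : x < bdry yb) by (destruct (Rlt_le_dec x (bdry yb)); auto; rewrite binv_hi in Heq; lra).
  replace x with (bdry y) by (rewrite Heq, bdry_binv; auto; split; auto; generalize (bdry_le 0 y); lra).
  apply smooth_fit; auto.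
Qed.

Lemma deriv_within_w_y (x y : R) : 0 <= y <= yb -> deriv_within (fun t => wfun p Ft x t) 0 yb y (wy x y).
Proof.
  intros Hy. unfold wy. rewrite Rplus_comm. destruct (Rlt_dec x (bdry y)).
  - apply deriv_within_w_y_waiting; auto.
  - apply deriv_within_w_y_stopped; auto. lra.
Qed.

Lemma cont_strip_w : cont_strip (wfun p Ft) yb.
Proof.
  apply (cont_strip_of_continuous2 _ (fun x y => Phi x (ystar x y) + cc * y)); [| apply wfun_Phi].
  intros x y Hy. apply continuous2_plus.
  - apply (continuous2_comp2 Phi (fun x y => x) ystar). apply continuous2_fst.
    apply continuous2_ystar.
    apply continuous2_Phi.
  - apply continuous2_mult. apply continuous2_const. apply continuous2_snd.
Qed.

Lemma cont_strip_wx : cont_strip wx yb.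
Proof.
  apply (cont_strip_of_continuous2 _ wx); auto. intros x y Hy. unfold wx.
  apply (continuous2_comp2 Phix (fun x y => x) ystar). apply continuous2_fst.
  apply continuous2_ystar.
  apply continuous2_Phix.
Qed.

Lemma cont_strip_wxx : cont_strip wxx yb.
Proof.
  apply (cont_strip_of_continuous2 _ wxx); auto. intros x y Hy. unfold wxx.
  apply (continuous2_comp2 Phixx (fun x y => x) ystar). apply continuous2_fst.
  apply continuous2_ystar.
  apply continuous2_Phixx.
Qed.

Lemma cont_strip_wy : cont_strip wy yb.
Proof.
  apply (cont_strip_of_continuous2 _ wy); auto. intros x y Hy. unfold wy.
  apply continuous2_plus. apply continuous2_const.
  apply (continuous2_cutoff Phiz bdry). apply continuous2_Phiz. apply continuous_bdry.
  intros ->. apply smooth_fit; auto.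
Qed.

End ValueFunction.

Theorem lemma4p6 (p : Params) :
  0 < p_kappa p -> 0 < p_sigma p -> 0 < p_rho p -> 0 < p_beta p -> 0 <= p_c p -> 0 < p_ybar p ->
  forall Ft : R -> R,
    (* Ft (ybar) = x tilde, the zero of H *)
    Hfun p (Ft (p_ybar p)) = 0 ->
    (* Ft solves Ft' = G(y, Ft) on [0, ybar] (G well defined along the solution) *)
    (forall y, 0 <= y <= p_ybar p ->
       Dfun p y (Ft y) <> 0 /\ deriv_within Ft 0 (p_ybar p) y (Gfun p y (Ft y))) ->
    (* F = Ft - beta y is strictly increasing on [0, ybar] *)
    (forall y1 y2, 0 <= y1 -> y1 < y2 -> y2 <= p_ybar p -> Ffun p Ft y1 < Ffun p Ft y2) ->
    C21_strip (wfun p Ft) (p_ybar p).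
Proof.
  intros Hk Hs Hr Hb _ Hyb Ft Hend Hode Hmono.
  exists (wx p Ft), (wxx p Ft), (wy p Ft).
  split; [| split; [| split; [| split]]].
  - intros x y Hy. split; [| split].
    + eapply is_derive_w_x; eauto.
    + eapply is_derive_wx_x; eauto.
    + eapply deriv_within_w_y; eauto.
  - eapply cont_strip_w; eauto.
  - eapply cont_strip_wx; eauto.
  - eapply cont_strip_wxx; eauto.
  - eapply cont_strip_wy; eauto.
Qed.
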